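(* Let $X,Y$ be real Banach spaces, $D\subseteq X$ a nonempty open connected set, $x_0\in D$, $y_0=f(x_0)$, and $f:D\to Y$ a local homeomorphism. Then there exists a flow $\Phi:D_\Phi\to D$ in $D$ satisfying $$f(\Phi(x,t))=\Psi(f(x),t)\qquad\text{for all }(x,t)\in D_\Phi,$$ where $\Psi(y,t)=y_0+e^{-t}(y-y_0)$; any two flows in $D$ satisfying this identity coincide on the intersection of their domains, so there is a unique such flow with maximal domain. If moreover $f$ is a local $C^1$ diffeomorphism, then this maximal flow $\Phi$ is $C^1$ and is the (maximal) flow of the differential equation $$\dot x=F(x),\qquad F:D\to X,\quad F(x)=-f'(x)^{-1}\bigl(f(x)-f(x_0)\bigr).$$
   Context: A map is a local homeomorphism if every point has an open neighbourhood mapped homeomorphically onto an open set. A flow in $D$ is a map $\Phi:D_\Phi\to D$ such that: (i) $D_\Phi$ is an open subset of $D\times\mathbb R$ and $\Phi$ is continuous; (ii) for each $x\in D$, $\{t\in\mathbb R:(x,t)\in D_\Phi\}$ is an interval containing $0$; (iii) $\Phi(x,0)=x$ for all $x\in D$; (iv) if $(x,t_1),(x,t_1+t_2)\in D_\Phi$ then $(\Phi(x,t_1),t_2)\in D_\Phi$ and $\Phi(\Phi(x,t_1),t_2)=\Phi(x,t_1+t_2)$. $f$ is a local $C^1$ diffeomorphism if it is $C^1$ (Fréchet) and each point has an open neighbourhood mapped homeomorphically onto an open set with $C^1$ inverse; then $f'(x)$ is invertible for every $x$. *)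

From Stdlib Require Import Reals Lra.
Open Scope R_scope.
Set Implicit Arguments.

Record BanachSpace := {
  carrier :> Type;
  vzero : carrier;
  vadd : carrier -> carrier -> carrier;
  vopp : carrier -> carrier;
  vscal : R -> carrier -> carrier;
  vnorm : carrier -> R;
  vadd_assoc : forall x y z, vadd x (vadd y z) = vadd (vadd x y) z;
  vadd_comm : forall x y, vadd x y = vadd y x;
  vadd_zero : forall x, vadd x vzero = x;
  vadd_opp : forall x, vadd x (vopp x) = vzero;
  vscal_one : forall x, vscal 1 x = x;
  vscal_assoc : forall a b x, vscal a (vscal b x) = vscal (a * b) x;
  vscal_distr_v : forall a x y, vscal a (vadd x y) = vadd (vscal a x) (vscal a y);
  vscal_distr_s : forall a b x, vscal (a + b) x = vadd (vscal a x) (vscal b x);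
  vnorm_nonneg : forall x, 0 <= vnorm x;
  vnorm_eq0 : forall x, vnorm x = 0 -> x = vzero;
  vnorm_scal : forall a x, vnorm (vscal a x) = Rabs a * vnorm x;
  vnorm_triangle : forall x y, vnorm (vadd x y) <= vnorm x + vnorm y;
  vcomplete : forall u : nat -> carrier,
    (forall eps, 0 < eps -> exists N, forall n m, (N <= n)%nat -> (N <= m)%nat ->
        vnorm (vadd (u n) (vopp (u m))) < eps) ->
    exists l, forall eps, 0 < eps -> exists N, forall n, (N <= n)%nat ->
        vnorm (vadd (u n) (vopp l)) < eps
}.

Arguments vzero {b} : rename.
Arguments vadd {b} : rename.
Arguments vopp {b} : rename.
Arguments vscal {b} : rename.
Arguments vnorm {b} : rename.

Definition vsub {X : BanachSpace} (x y : X) : X := vadd x (vopp y).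

Section Topology.
Variables X Y : BanachSpace.

Definition is_open (U : X -> Prop) : Prop :=
  forall x, U x -> exists eps, 0 < eps /\ forall x', vnorm (vsub x' x) < eps -> U x'.

Definition is_open_XR (W : X -> R -> Prop) : Prop :=
  forall x t, W x t -> exists eps, 0 < eps /\
    forall x' t', vnorm (vsub x' x) < eps -> Rabs (t' - t) < eps -> W x' t'.

Definition is_connected (D : X -> Prop) : Prop :=
  forall U V : X -> Prop, is_open U -> is_open V ->
    (forall x, D x -> U x \/ V x) ->
    (exists x, D x /\ U x) -> (exists x, D x /\ V x) ->
    exists x, D x /\ U x /\ V x.

Definition image (f : X -> Y) (U : X -> Prop) : Y -> Prop :=
  fun y => exists x, U x /\ f x = y.

Definition continuous_on (U : X -> Prop) (f : X -> Y) : Prop :=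
  forall x, U x -> forall eps, 0 < eps -> exists delta, 0 < delta /\
    forall x', U x' -> vnorm (vsub x' x) < delta -> vnorm (vsub (f x') (f x)) < eps.

Definition injective_on (U : X -> Prop) (f : X -> Y) : Prop :=
  forall x x', U x -> U x' -> f x = f x' -> x = x'.

Definition bounded_linear (L : X -> Y) : Prop :=
  (forall x y, L (vadd x y) = vadd (L x) (L y)) /\
  (forall a x, L (vscal a x) = vscal a (L x)) /\
  (exists M, 0 <= M /\ forall x, vnorm (L x) <= M * vnorm x).

Definition frechet_at (U : X -> Prop) (f : X -> Y) (x : X) (L : X -> Y) : Prop :=
  bounded_linear L /\
  forall eps, 0 < eps -> exists delta, 0 < delta /\
    forall h, vnorm h < delta -> U (vadd x h) ->
      vnorm (vsub (vsub (f (vadd x h)) (f x)) (L h)) <= eps * vnorm h.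

Definition frechet_derivative_on (U : X -> Prop) (f : X -> Y) (Df : X -> X -> Y) : Prop :=
  forall x, U x -> frechet_at U f x (Df x).

(** f is C^1 on the open set U: Frechet differentiable with derivative
    continuous for the operator norm *)
Definition C1_on (U : X -> Prop) (f : X -> Y) : Prop :=
  exists Df : X -> X -> Y, frechet_derivative_on U f Df /\
    forall x, U x -> forall eps, 0 < eps -> exists delta, 0 < delta /\
      forall x', U x' -> vnorm (vsub x' x) < delta ->
        forall h, vnorm (vsub (Df x' h) (Df x h)) <= eps * vnorm h.

End Topology.

Arguments is_open {X}.
Arguments is_open_XR {X}.
Arguments is_connected {X}.
Arguments image {X Y}.
Arguments continuous_on {X Y}.
Arguments injective_on {X Y}.
Arguments bounded_linear {X Y}.
Arguments frechet_at {X Y}.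
Arguments frechet_derivative_on {X Y}.
Arguments C1_on {X Y}.

Definition local_homeomorphism {X Y : BanachSpace} (D : X -> Prop) (f : X -> Y) : Prop :=
  forall x, D x -> exists U : X -> Prop,
    is_open U /\ (forall u, U u -> D u) /\ U x /\
    is_open (image f U) /\ injective_on U f /\ continuous_on U f /\
    exists g : Y -> X,
      (forall v, image f U v -> U (g v) /\ f (g v) = v) /\
      continuous_on (image f U) g.

Definition local_C1_diffeomorphism {X Y : BanachSpace} (D : X -> Prop) (f : X -> Y) : Prop :=
  C1_on D f /\
  forall x, D x -> exists U : X -> Prop,
    is_open U /\ (forall u, U u -> D u) /\ U x /\
    is_open (image f U) /\ injective_on U f /\ continuous_on U f /\
    exists g : Y -> X,
      (forall v, image f U v -> U (g v) /\ f (g v) = v) /\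
      C1_on (image f U) g.

Definition is_flow_in {X : BanachSpace} (D : X -> Prop)
    (DPhi : X -> R -> Prop) (Phi : X -> R -> X) : Prop :=
  (forall x t, DPhi x t -> D x) /\
  is_open_XR DPhi /\
  (forall x t, DPhi x t -> D (Phi x t)) /\
  (forall x t, DPhi x t -> forall eps, 0 < eps -> exists delta, 0 < delta /\
     forall x' t', DPhi x' t' -> vnorm (vsub x' x) < delta -> Rabs (t' - t) < delta ->
       vnorm (vsub (Phi x' t') (Phi x t)) < eps) /\
  (forall x, D x -> DPhi x 0 /\
     forall a b t, DPhi x a -> DPhi x b -> a <= t <= b -> DPhi x t) /\
  (forall x, D x -> Phi x 0 = x) /\
  (forall x t1 t2, DPhi x t1 -> DPhi x (t1 + t2) ->
     DPhi (Phi x t1) t2 /\ Phi (Phi x t1) t2 = Phi x (t1 + t2)).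

Definition Psi {Y : BanachSpace} (y0 : Y) (y : Y) (t : R) : Y :=
  vadd y0 (vscal (exp (- t)) (vsub y y0)).

Definition conjugates {X Y : BanachSpace} (f : X -> Y) (y0 : Y)
    (DPhi : X -> R -> Prop) (Phi : X -> R -> X) : Prop :=
  forall x t, DPhi x t -> f (Phi x t) = Psi y0 (f x) t.

(** Phi is C^1 on the open set DPhi of X x R (Frechet derivative
    (h,s) |-> A x t h + s * B x t, continuous in operator norm) *)
Definition C1_on_XR {X : BanachSpace} (DPhi : X -> R -> Prop) (Phi : X -> R -> X) : Prop :=
  exists (A : X -> R -> X -> X) (B : X -> R -> X),
    forall x t, DPhi x t ->
      bounded_linear (A x t) /\
      (forall eps, 0 < eps -> exists delta, 0 < delta /\
        forall h s, vnorm h < delta -> Rabs s < delta -> DPhi (vadd x h) (t + s) ->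
          vnorm (vsub (vsub (Phi (vadd x h) (t + s)) (Phi x t))
                      (vadd (A x t h) (vscal s (B x t))))
            <= eps * Rmax (vnorm h) (Rabs s)) /\
      (forall eps, 0 < eps -> exists delta, 0 < delta /\
        forall x' t', DPhi x' t' -> vnorm (vsub x' x) < delta -> Rabs (t' - t) < delta ->
          (forall h, vnorm (vsub (A x' t' h) (A x t h)) <= eps * vnorm h) /\
          vnorm (vsub (B x' t') (B x t)) <= eps).

Definition curve_deriv_at {X : BanachSpace} (J : R -> Prop) (gamma : R -> X)
    (t : R) (v : X) : Prop :=
  forall eps, 0 < eps -> exists delta, 0 < delta /\
    forall s, Rabs s < delta -> J (t + s) ->
      vnorm (vsub (vsub (gamma (t + s)) (gamma t)) (vscal s v)) <= eps * Rabs s.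

Definition open_interval_R (J : R -> Prop) : Prop :=
  (forall t, J t -> exists eps, 0 < eps /\ forall t', Rabs (t' - t) < eps -> J t') /\
  (forall a b t, J a -> J b -> a <= t <= b -> J t).

Definition maximal_ode_flow {X : BanachSpace} (D : X -> Prop) (F : X -> X)
    (DPhi : X -> R -> Prop) (Phi : X -> R -> X) : Prop :=
  forall x, D x ->
    (forall t, DPhi x t -> curve_deriv_at (DPhi x) (Phi x) t (F (Phi x t))) /\
    (forall (J : R -> Prop) (gamma : R -> X),
       open_interval_R J -> J 0 -> gamma 0 = x ->
       (forall t, J t -> D (gamma t)) ->
       (forall t, J t -> curve_deriv_at J gamma t (F (gamma t))) ->
       forall t, J t -> DPhi x t /\ gamma t = Phi x t).

(** Call a pair (E, P) a lift if E is an open subset of D x R whose sections are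
    intervals containing 0, and P : E -> D is continuous with P(x, 0) = x and
    f (P (x, t)) = Psi (f x) t.  Since f is locally injective, two lifts agree on their
    common domain (continuation along the segment from 0 to t), so the union of all
    lifts is again a lift: the maximal flow.  Charts of f give lifts near t = 0 and
    allow any continuous lift of a path t |-> Psi (f x) t to be absorbed into the
    maximal one, which yields the group law and maximality.

    If f is a local C^1 diffeomorphism, the maximal flow is locally g (Psi (f x) t) for
    a C^1 local inverse g, hence C^1 with time derivative
    -f'(Phi)^-1 (f Phi - f x0) = F Phi.  Conversely, along a solution gamma of x' = F x
    the curve exp t * (f (gamma t) - f x0) has derivative zero, so gamma lifts Psi and
    lies on an orbit. *)

From Stdlib Require Import Reals Lra ClassicalEpsilon Classical.
Open Scope R_scope.

Section VectorAlgebra.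
Variable B : BanachSpace.
Implicit Types x y z u v : B.

Lemma vadd_0l x : vadd vzero x = x.
Proof. rewrite vadd_comm; apply vadd_zero. Qed.
Lemma vadd_opp_l x : vadd (vopp x) x = vzero.
Proof. rewrite vadd_comm; apply vadd_opp. Qed.
Lemma vadd_cancel_l x y z : vadd x y = vadd x z -> y = z.
Proof.
  intro H. assert (H0 : vadd (vopp x) (vadd x y) = vadd (vopp x) (vadd x z)) by (rewrite H; auto).
  rewrite !vadd_assoc, vadd_opp_l, !vadd_0l in H0. exact H0.
Qed.
Lemma vscal_0l x : vscal 0 x = vzero.
Proof.
  apply (vadd_cancel_l (vscal 0 x)). rewrite vadd_zero, <- vscal_distr_s.
  f_equal; ring.
Qed.
Lemma vscal_0r a : vscal a (@vzero B) = vzero.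
Proof. rewrite <- (vscal_0l vzero) at 1. rewrite vscal_assoc, Rmult_0_r. apply vscal_0l. Qed.
Lemma vopp_scal x : vopp x = vscal (-1) x.
Proof.
  apply (vadd_cancel_l x). rewrite vadd_opp.
  rewrite <- (vscal_one _ x) at 1. rewrite <- vscal_distr_s.
  replace (1 + -1) with 0 by ring. symmetry; apply vscal_0l.
Qed.
Lemma vnorm_0 : vnorm (@vzero B) = 0.
Proof. rewrite <- (vscal_0l vzero), vnorm_scal, Rabs_R0; ring. Qed.
Lemma vnorm_opp x : vnorm (vopp x) = vnorm x.
Proof. rewrite vopp_scal, vnorm_scal, Rabs_left by lra; ring. Qed.
Lemma vopp_opp x : vopp (vopp x) = x.
Proof. rewrite !vopp_scal, vscal_assoc. replace (-1 * -1) with 1 by ring. apply vscal_one. Qed.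
Lemma vopp_add x y : vopp (vadd x y) = vadd (vopp x) (vopp y).
Proof. rewrite !vopp_scal. apply vscal_distr_v. Qed.
Lemma vopp_0 : vopp (@vzero B) = vzero.
Proof. rewrite vopp_scal; apply vscal_0r. Qed.
Lemma vsub_self x : vsub x x = vzero.
Proof. apply vadd_opp. Qed.
Lemma vsub_0r x : vsub x vzero = x.
Proof. unfold vsub; rewrite vopp_0; apply vadd_zero. Qed.
Lemma vsub_add_cancel x y : vadd (vsub x y) y = x.
Proof. unfold vsub. rewrite <- vadd_assoc, vadd_opp_l, vadd_zero. auto. Qed.
Lemma vadd_sub_cancel x y : vsub (vadd x y) y = x.
Proof. unfold vsub. rewrite <- vadd_assoc, vadd_opp, vadd_zero. auto. Qed.
Lemma vadd_sub_cancel_l x y : vsub (vadd x y) x = y.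
Proof. rewrite vadd_comm; apply vadd_sub_cancel. Qed.
Lemma vadd_sub_r x y : vadd x (vsub y x) = y.
Proof. rewrite vadd_comm; apply vsub_add_cancel. Qed.
Lemma vsub_eq x y : vsub x y = vzero -> x = y.
Proof. intro H. rewrite <- (vsub_add_cancel x y), H. apply vadd_0l. Qed.
Lemma vsub_chasles x y z : vsub x z = vadd (vsub x y) (vsub y z).
Proof.
  unfold vsub. rewrite vadd_assoc. f_equal. rewrite <- vadd_assoc, vadd_opp_l, vadd_zero. auto.
Qed.
Lemma vsub_triangle x y z : vnorm (vsub x z) <= vnorm (vsub x y) + vnorm (vsub y z).
Proof. rewrite (vsub_chasles x y z). apply vnorm_triangle. Qed.
Lemma vopp_sub x y : vsub y x = vopp (vsub x y).
Proof.
  unfold vsub. rewrite vopp_add, vopp_opp, vadd_comm. auto.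
Qed.
Lemma vnorm_sub_sym x y : vnorm (vsub x y) = vnorm (vsub y x).
Proof. rewrite (vopp_sub y x), vnorm_opp; auto. Qed.
Lemma vnorm_sub_ge x y : vnorm x - vnorm y <= vnorm (vsub x y).
Proof.
  pose proof (vnorm_triangle _ (vsub x y) y). rewrite vsub_add_cancel in H. lra.
Qed.
Lemma vnorm_sub_le x y : vnorm (vsub x y) <= vnorm x + vnorm y.
Proof. unfold vsub. rewrite <- (vnorm_opp y). apply vnorm_triangle. Qed.
Lemma veq_of_small x y : (forall eps, 0 < eps -> vnorm (vsub x y) <= eps) -> x = y.
Proof.
  intro H. apply vsub_eq. apply vnorm_eq0.
  pose proof (vnorm_nonneg _ (vsub x y)).
  destruct (Rle_lt_or_eq_dec _ _ H0) as [Hl|Hl]; [|auto].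
  specialize (H (vnorm (vsub x y) / 2) ltac:(lra)). lra.
Qed.
Lemma vscal_sub_r a x y : vscal a (vsub x y) = vsub (vscal a x) (vscal a y).
Proof.
  unfold vsub. rewrite vscal_distr_v. f_equal. rewrite !vopp_scal, !vscal_assoc. f_equal; ring.
Qed.
Lemma vscal_sub_l a b x : vscal (a - b) x = vsub (vscal a x) (vscal b x).
Proof.
  unfold vsub, Rminus. rewrite vscal_distr_s. f_equal. rewrite vopp_scal, vscal_assoc. f_equal; ring.
Qed.
Lemma vscal_opp_r a x : vscal a (vopp x) = vopp (vscal a x).
Proof. rewrite !vopp_scal, !vscal_assoc. f_equal; ring. Qed.
Lemma vscal_opp_l a x : vscal (- a) x = vopp (vscal a x).
Proof. rewrite !vopp_scal, !vscal_assoc. f_equal; ring. Qed.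
Lemma vsub_add_add x y z u : vsub (vadd x y) (vadd z u) = vadd (vsub x z) (vsub y u).
Proof.
  unfold vsub. rewrite vopp_add. rewrite !vadd_assoc. f_equal.
  rewrite <- !vadd_assoc. f_equal. apply vadd_comm.
Qed.
Lemma vsub_sub_sub x y z : vsub (vsub x y) (vsub z y) = vsub x z.
Proof.
  unfold vsub. rewrite vopp_add, vopp_opp. rewrite (vadd_comm _ (vopp z) y), vadd_assoc.
  rewrite <- (vadd_assoc _ x (vopp y) y), vadd_opp_l, vadd_zero. auto.
Qed.
Lemma vsub_add_l x y z : vsub (vadd x y) (vadd x z) = vsub y z.
Proof. rewrite vsub_add_add, vsub_self, vadd_0l. auto. Qed.
Lemma vsub_opp x y : vsub (vopp x) (vopp y) = vopp (vsub x y).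
Proof. unfold vsub. rewrite vopp_add. auto. Qed.
Lemma vsub_sub_l x y z : vsub (vsub x y) (vsub x z) = vsub z y.
Proof.
  change (vsub (vadd x (vopp y)) (vadd x (vopp z)) = vsub z y).
  rewrite vsub_add_l, vsub_opp, <- vopp_sub. auto.
Qed.
Lemma vsub_sub_swap x y z u : vsub (vsub x y) (vsub z u) = vsub (vsub x z) (vsub y u).
Proof.
  change (vsub (vadd x (vopp y)) (vadd z (vopp u)) = vsub (vsub x z) (vsub y u)).
  rewrite vsub_add_add, vsub_opp. reflexivity.
Qed.
Lemma vsub_telescope p q r m n u :
  vadd (vadd (vsub (vsub p q) r) (vsub (vsub q m) n)) (vsub r u) = vsub (vsub p m) (vadd n u).
Proof.
  rewrite <- (vsub_add_add (vsub p q) (vsub q m) r n), <- vsub_chasles.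
  rewrite <- vsub_add_add, <- vadd_assoc, (vadd_comm _ _ r), vsub_add_l.
  reflexivity.
Qed.
Lemma vsub_scal_scal a b x y :
  vsub (vscal a x) (vscal b y) = vadd (vscal a (vsub x y)) (vscal (a - b) y).
Proof.
  rewrite (vsub_chasles (vscal a x) (vscal a y) (vscal b y)), vscal_sub_r, vscal_sub_l. auto.
Qed.
End VectorAlgebra.

Arguments vadd_0l {B}.
Arguments veq_of_small {B}.

Lemma vnorm_le_scale_nonneg {Y : BanachSpace} (v : Y) eps a :
  0 < eps -> vnorm v <= eps * a -> 0 <= a.
Proof. intros He H. pose proof (vnorm_nonneg _ v). nra. Qed.


Lemma derivable_pt_lim_little_o (a : R -> R) t l : derivable_pt_lim a t l ->
  forall eps, 0 < eps -> exists delta, 0 < delta /\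
    forall s, Rabs s < delta -> Rabs (a (t + s) - a t - s * l) <= eps * Rabs s.
Proof.
  intros Ha eps He. destruct (Ha eps He) as [d Hd].
  exists d. split; [apply cond_pos|]. intros s Hs.
  destruct (Req_dec s 0) as [->|Hs0].
  - rewrite Rplus_0_r, Rabs_R0. replace (a t - a t - 0 * l) with 0 by ring. rewrite Rabs_R0. lra.
  - replace (a (t + s) - a t - s * l) with (s * ((a (t + s) - a t) / s - l)) by (field; auto).
    rewrite Rabs_mult, Rmult_comm. apply Rmult_le_compat_r; [apply Rabs_pos|].
    specialize (Hd s Hs0 Hs). lra.
Qed.

Lemma derivable_pt_lim_cont (a : R -> R) t l : derivable_pt_lim a t l ->
  forall eps, 0 < eps -> exists delta, 0 < delta /\
    forall t', Rabs (t' - t) < delta -> Rabs (a t' - a t) < eps.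
Proof.
  intros Ha eps He.
  destruct (derivable_continuous_pt a t (exist _ l Ha) eps He) as [d [Hd Hc]].
  exists d. split; auto. intros t' Ht.
  destruct (Req_dec t' t) as [->|Hne].
  - rewrite Rminus_diag_eq, Rabs_R0; auto.
  - apply (Hc t'). split; [split; [exact I|auto]|exact Ht].
Qed.

Lemma derivable_pt_lim_expm t : derivable_pt_lim (fun s => exp (- s)) t (- exp (- t)).
Proof.
  replace (- exp (- t)) with (exp (- t) * -1) by ring.
  apply (derivable_pt_lim_comp Ropp exp t (-1) (exp (- t))).
  - replace (-1) with (- 1) by ring. apply derivable_pt_lim_opp, derivable_pt_lim_id.
  - apply derivable_pt_lim_exp.
Qed.

Section PsiFacts.
Variable Y : BanachSpace.
Variable y0 : Y.

Lemma Psi_0 y : Psi y0 y 0 = y.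
Proof. unfold Psi. rewrite Ropp_0, exp_0, vscal_one. apply vadd_sub_r. Qed.

Lemma Psi_sub y t : vsub (Psi y0 y t) y0 = vscal (exp (- t)) (vsub y y0).
Proof. unfold Psi. apply vadd_sub_cancel_l. Qed.

Lemma Psi_comp y t1 t2 : Psi y0 (Psi y0 y t1) t2 = Psi y0 y (t1 + t2).
Proof.
  unfold Psi at 1. rewrite Psi_sub, vscal_assoc, <- exp_plus.
  unfold Psi. do 3 f_equal. ring.
Qed.

Lemma Psi_diff y y' t t' : vsub (Psi y0 y' t') (Psi y0 y t) =
  vadd (vscal (exp (- t')) (vsub y' y)) (vscal (exp (- t') - exp (- t)) (vsub y y0)).
Proof.
  rewrite <- (vsub_sub_sub _ (Psi y0 y' t') y0 (Psi y0 y t)), !Psi_sub, vscal_sub_l.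
  rewrite (vsub_chasles _ y' y y0), vscal_distr_v. unfold vsub.
  symmetry. apply vadd_assoc.
Qed.

Lemma Psi_diff_same y y' s :
  vsub (Psi y0 y' s) (Psi y0 y s) = vscal (exp (- s)) (vsub y' y).
Proof. rewrite Psi_diff, Rminus_diag_eq, vscal_0l, vadd_zero; auto. Qed.

Lemma Psi_increment y y' t s v :
  vsub (vsub (Psi y0 y' (t + s)) (Psi y0 y t))
       (vadd (vscal (exp (- t)) v) (vscal s (vopp (vsub (Psi y0 y t) y0))))
  = vadd (vadd (vscal (exp (- (t + s))) (vsub (vsub y' y) v))
               (vscal (exp (- (t + s)) - exp (- t)) v))
         (vscal (exp (- (t + s)) - exp (- t) - s * - exp (- t)) (vsub y y0)).
Proof.
  rewrite Psi_diff, Psi_sub, vsub_add_add, <- vscal_opp_l, vscal_assoc, <- vscal_sub_l.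
  f_equal. rewrite (vsub_chasles _ _ (vscal (exp (- (t + s))) v)), vscal_sub_r, vscal_sub_l.
  rewrite !vscal_sub_r. reflexivity.
Qed.

Lemma Psi_lipschitz y y' t a : a <= t ->
  vnorm (vsub (Psi y0 y' t) (Psi y0 y t)) <= exp (- a) * vnorm (vsub y' y).
Proof.
  intro Hat. rewrite Psi_diff_same, vnorm_scal, Rabs_right by (apply Rle_ge, Rlt_le, exp_pos).
  apply Rmult_le_compat_r; [apply vnorm_nonneg|].
  destruct (Req_dec a t) as [->|]; [lra|left; apply exp_increasing; lra].
Qed.

Lemma Psi_cont y t eps : 0 < eps -> exists delta, 0 < delta /\
  forall y' t', vnorm (vsub y' y) < delta -> Rabs (t' - t) < delta ->
    vnorm (vsub (Psi y0 y' t') (Psi y0 y t)) < eps.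
Proof.
  intro He. set (K := vnorm (vsub y y0)). assert (HK : 0 <= K) by apply vnorm_nonneg.
  set (e := exp (- t)). assert (He0 : 0 < e) by apply exp_pos.
  destruct (derivable_pt_lim_cont _ _ _ (derivable_pt_lim_expm t) (Rmin 1 (eps / (2 * (K + 1)))))
    as [d1 [Hd1 H1]].
  { apply Rmin_pos; [lra|apply Rdiv_lt_0_compat; lra]. }
  exists (Rmin d1 (eps / (2 * (e + 1)))). split.
  { apply Rmin_pos; auto. apply Rdiv_lt_0_compat; lra. }
  intros y' t' Hy Ht.
  specialize (H1 t' (Rlt_le_trans _ _ _ Ht (Rmin_l _ _))).
  pose proof (Rmin_l 1 (eps / (2 * (K + 1)))). pose proof (Rmin_r 1 (eps / (2 * (K + 1)))).
  pose proof (Rmin_r d1 (eps / (2 * (e + 1)))).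
  fold e in H1. set (e' := exp (- t')) in *. assert (He' : 0 < e') by apply exp_pos.
  assert (Hy' : vnorm (vsub y' y) * (e + 1) < eps / 2).
  { apply (Rmult_lt_compat_r (e + 1)) in Hy; [|lra].
    eapply Rlt_le_trans; [exact Hy|]. apply Rle_trans with (eps / (2 * (e + 1)) * (e + 1)).
    apply Rmult_le_compat_r; [lra|apply Rmin_r]. right; field; lra. }
  assert (HKe : Rabs (e' - e) * K <= eps / 2).
  { apply Rle_trans with (eps / (2 * (K + 1)) * (K + 1)); [|right; field; lra].
    apply Rmult_le_compat; try lra. apply Rabs_pos. }
  rewrite Psi_diff. eapply Rle_lt_trans; [apply vnorm_triangle|]. rewrite !vnorm_scal.
  fold K e e'. rewrite (Rabs_right e') by lra.
  assert (e' < e + 1) by (apply Rabs_def2 in H1; lra).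
  assert (e' * vnorm (vsub y' y) <= (e + 1) * vnorm (vsub y' y))
    by (apply Rmult_le_compat_r; [apply vnorm_nonneg|lra]).
  fold e. lra.
Qed.
End PsiFacts.

Section Linear.
Variables X Y Z : BanachSpace.
Variable L : X -> Y.
Hypothesis HL : bounded_linear L.

Lemma lin_add x y : L (vadd x y) = vadd (L x) (L y).
Proof. apply HL. Qed.

Lemma lin_scal a x : L (vscal a x) = vscal a (L x).
Proof. apply HL. Qed.

Lemma lin_0 : L vzero = vzero.
Proof. rewrite <- (vscal_0l _ vzero), lin_scal. apply vscal_0l. Qed.

Lemma lin_opp x : L (vopp x) = vopp (L x).
Proof. rewrite !vopp_scal. apply lin_scal. Qed.

Lemma lin_sub x y : L (vsub x y) = vsub (L x) (L y).
Proof. unfold vsub. rewrite lin_add, lin_opp. reflexivity. Qed.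

Lemma lin_bound : exists M, 0 < M /\ forall x, vnorm (L x) <= M * vnorm x.
Proof.
  destruct HL as [_ [_ [M [HM H]]]]. exists (M + 1). split; [lra|]. intro x.
  specialize (H x). pose proof (vnorm_nonneg _ x). nra.
Qed.

Lemma lin_comp (M : Y -> Z) : bounded_linear M -> bounded_linear (fun x => M (L x)).
Proof.
  intros HM. split; [|split].
  - intros. rewrite lin_add. apply HM.
  - intros. rewrite lin_scal. apply HM.
  - destruct lin_bound as [a [Ha Hla]]. destruct HM as [_ [_ [b [Hb Hlb]]]].
    exists (b * a). split; [nra|]. intro x. eapply Rle_trans; [apply Hlb|].
    rewrite Rmult_assoc. apply Rmult_le_compat_l; [lra|apply Hla].
Qed.
End Linear.

Arguments lin_add {X Y L}. Arguments lin_scal {X Y L}. Arguments lin_0 {X Y L}.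
Arguments lin_opp {X Y L}. Arguments lin_sub {X Y L}. Arguments lin_bound {X Y L}.
Arguments lin_comp {X Y Z L}.

Lemma lin_ext {X Y : BanachSpace} (L1 L2 : X -> Y) :
  (forall h, L1 h = L2 h) -> bounded_linear L1 -> bounded_linear L2.
Proof.
  intros He [Ha [Hs [M [HM Hb]]]]. split; [|split].
  - intros; rewrite <- !He; auto.
  - intros; rewrite <- !He; auto.
  - exists M; split; auto. intros; rewrite <- He; auto.
Qed.

Lemma lin_vscal {X : BanachSpace} (a : R) : bounded_linear (fun h : X => vscal a h).
Proof.
  split; [|split].
  - intros; apply vscal_distr_v.
  - intros. rewrite !vscal_assoc, Rmult_comm. auto.
  - exists (Rabs a). split; [apply Rabs_pos|]. intros; rewrite vnorm_scal; lra.
Qed.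

Lemma lin_apply_close {Y Z : BanachSpace} (M M' : Y -> Z) KM e v v' :
  bounded_linear M -> (forall w, vnorm (M w) <= KM * vnorm w) ->
  (forall w, vnorm (vsub (M' w) (M w)) <= e * vnorm w) ->
  vnorm (vsub (M' v') (M v)) <= e * vnorm v' + KM * vnorm (vsub v' v).
Proof.
  intros HM HKM Hc. rewrite (vsub_chasles _ _ (M v')). eapply Rle_trans; [apply vnorm_triangle|].
  rewrite <- (lin_sub HM). apply Rplus_le_compat; auto.
Qed.

Lemma op_comp_close {X Y Z : BanachSpace} (L L' : X -> Y) (M M' : Y -> Z) KL KM e1 e2 :
  bounded_linear M -> (forall w, vnorm (M w) <= KM * vnorm w) ->
  (forall h, vnorm (L h) <= KL * vnorm h) ->
  (forall h, vnorm (vsub (L' h) (L h)) <= e1 * vnorm h) ->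
  (forall w, vnorm (vsub (M' w) (M w)) <= e2 * vnorm w) -> 0 <= e2 -> 0 <= KM ->
  forall h, vnorm (vsub (M' (L' h)) (M (L h))) <= (e2 * (KL + e1) + KM * e1) * vnorm h.
Proof.
  intros HM HKM HKL HL HM' He2 HKM0 h.
  eapply Rle_trans; [apply (lin_apply_close M M' KM e2); auto|].
  assert (vnorm (L' h) <= (KL + e1) * vnorm h).
  { pose proof (vnorm_triangle _ (vsub (L' h) (L h)) (L h)) as Ht.
    rewrite vsub_add_cancel in Ht. specialize (HL h). specialize (HKL h). lra. }
  assert (e2 * vnorm (L' h) <= e2 * ((KL + e1) * vnorm h)) by (apply Rmult_le_compat_l; auto).
  assert (KM * vnorm (vsub (L' h) (L h)) <= KM * (e1 * vnorm h)) by (apply Rmult_le_compat_l; auto).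
  nra.
Qed.

(** [frechet_at], [curve_deriv_at] and the middle clause of [C1_on_XR] are all
    instances of [little_o], for the increments [h], [s] and [(h, s)]. *)
Definition little_o {I : Type} {Y : BanachSpace} (size : I -> R) (dom : I -> Prop)
    (r : I -> Y) : Prop :=
  forall eps, 0 < eps -> exists delta, 0 < delta /\
    forall i, size i < delta -> dom i -> vnorm (r i) <= eps * size i.

Section LittleO.
Variables (I : Type) (size : I -> R) (dom : I -> Prop).

Lemma little_o_le {Y Z : BanachSpace} (r : I -> Y) (r' : I -> Z) :
  (forall i, dom i -> vnorm (r i) <= vnorm (r' i)) ->
  little_o size dom r' -> little_o size dom r.
Proof.
  intros Hle H eps He. destruct (H eps He) as [d [Hd Hb]].
  exists d. split; auto. intros i Hi Hdi. eapply Rle_trans; [apply Hle|apply Hb]; auto.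
Qed.

Lemma little_o_add {Y : BanachSpace} (r1 r2 : I -> Y) :
  little_o size dom r1 -> little_o size dom r2 ->
  little_o size dom (fun i => vadd (r1 i) (r2 i)).
Proof.
  intros H1 H2 eps He.
  destruct (H1 (eps / 2) ltac:(lra)) as [d1 [Hd1 Hb1]].
  destruct (H2 (eps / 2) ltac:(lra)) as [d2 [Hd2 Hb2]].
  exists (Rmin d1 d2). split; [apply Rmin_pos; auto|]. intros i Hi Hdi.
  specialize (Hb1 i (Rlt_le_trans _ _ _ Hi (Rmin_l _ _)) Hdi).
  specialize (Hb2 i (Rlt_le_trans _ _ _ Hi (Rmin_r _ _)) Hdi).
  pose proof (vnorm_triangle _ (r1 i) (r2 i)). lra.
Qed.

Lemma little_o_sub {Y : BanachSpace} (r1 r2 : I -> Y) :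
  little_o size dom r1 -> little_o size dom r2 ->
  little_o size dom (fun i => vsub (r1 i) (r2 i)).
Proof.
  intros H1 H2. apply little_o_add; auto.
  apply (little_o_le _ r2); auto. intros i _. rewrite vnorm_opp. apply Rle_refl.
Qed.
End LittleO.

Lemma little_o_dom {I : Type} {Y : BanachSpace} (size : I -> R) (dom dom' : I -> Prop)
    (r : I -> Y) :
  (forall i, dom' i -> dom i) -> little_o size dom r -> little_o size dom' r.
Proof.
  intros Hd H eps He. destruct (H eps He) as [d [Hd0 Hb]]. exists d. split; auto.
Qed.

Arguments little_o_le {I size dom Y Z}.
Arguments little_o_add {I size dom Y}.
Arguments little_o_sub {I size dom Y}.

Lemma little_o_chain {I : Type} {Y Z : BanachSpace} (size : I -> R) (dom : I -> Prop)
    (k l : I -> Y) (k0 : Y) (C : R) (V : Y -> Prop) (g : Y -> Z) (M : Y -> Z) :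
  (forall i, vnorm (l i) <= C * size i) ->
  little_o size dom (fun i => vsub (vsub (k i) k0) (l i)) ->
  frechet_at V g k0 M -> (forall i, dom i -> V (k i)) ->
  little_o size dom (fun i => vsub (vsub (g (k i)) (g k0)) (M (l i))).
Proof.
  intros Hl Hk [HM Hg] HV eps He.
  destruct (lin_bound HM) as [MM [HMM HbM]].
  set (C' := Rabs C + 1).
  assert (HC' : 0 < C') by (pose proof (Rabs_pos C); unfold C'; lra).
  set (e1 := eps / (2 * C')). assert (He1 : 0 < e1) by (apply Rdiv_lt_0_compat; lra).
  set (e2 := Rmin 1 (eps / (2 * MM))).
  assert (He2 : 0 < e2) by (apply Rmin_pos; [lra|apply Rdiv_lt_0_compat; lra]).
  assert (He21 : e2 <= 1) by apply Rmin_l. assert (He22 : e2 <= eps / (2 * MM)) by apply Rmin_r.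
  destruct (Hg e1 He1) as [dg [Hdg Hgb]].
  destruct (Hk e2 He2) as [dk [Hdk Hkb]].
  exists (Rmin dk (dg / C')). split; [apply Rmin_pos; auto; apply Rdiv_lt_0_compat; lra|].
  intros i Hi Hdi.
  specialize (Hkb i (Rlt_le_trans _ _ _ Hi (Rmin_l _ _)) Hdi).
  assert (Hs : 0 <= size i) by exact (vnorm_le_scale_nonneg _ _ _ He2 Hkb).
  set (d := vsub (k i) k0) in Hkb.
  assert (Hl' : vnorm (l i) <= Rabs C * size i).
  { eapply Rle_trans; [apply Hl|]. apply Rmult_le_compat_r; [lra|apply Rle_abs]. }
  assert (Hd : vnorm d <= C' * size i).
  { pose proof (vnorm_sub_ge _ d (l i)). unfold C'. nra. }
  assert (Hdg' : vnorm d < dg).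
  { apply Rle_lt_trans with (C' * size i); auto.
    assert (size i < dg / C') by (eapply Rlt_le_trans; [apply Hi|apply Rmin_r]).
    apply (Rmult_lt_compat_l C') in H; auto.
    replace (C' * (dg / C')) with dg in H by (field; lra). exact H. }
  specialize (Hgb d Hdg'). unfold d in Hgb. rewrite vadd_sub_r in Hgb. specialize (Hgb (HV i Hdi)).
  fold d in Hgb.
  rewrite (vsub_chasles _ _ (M d)). eapply Rle_trans; [apply vnorm_triangle|].
  rewrite <- (lin_sub HM).
  assert (vnorm (M (vsub d (l i))) <= MM * (e2 * size i))
    by (eapply Rle_trans; [apply HbM|apply Rmult_le_compat_l; lra]).
  assert (e1 * vnorm d <= eps / 2 * size i).
  { apply Rle_trans with (e1 * (C' * size i)); [apply Rmult_le_compat_l; lra|].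
    right. unfold e1. field. lra. }
  assert (MM * (e2 * size i) <= eps / 2 * size i).
  { rewrite <- Rmult_assoc. apply Rmult_le_compat_r; auto.
    apply Rle_trans with (MM * (eps / (2 * MM))); [apply Rmult_le_compat_l; lra|].
    right; field; lra. }
  lra.
Qed.

Section Frechet.
Variables X Y Z : BanachSpace.

Lemma frechet_unique (U : X -> Prop) (f : X -> Y) x L1 L2 : is_open U -> U x ->
  frechet_at U f x L1 -> frechet_at U f x L2 -> forall h, L1 h = L2 h.
Proof.
  intros HU Hx [HL1 H1] [HL2 H2] h. apply veq_of_small. intros eps He.
  set (n := vnorm h). assert (Hn : 0 <= n) by apply vnorm_nonneg.
  set (e1 := eps / (2 * (n + 1))). assert (He1 : 0 < e1) by (apply Rdiv_lt_0_compat; lra).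
  destruct (H1 e1 He1) as [d1 [Hd1 Hf1]]. destruct (H2 e1 He1) as [d2 [Hd2 Hf2]].
  destruct (HU x Hx) as [r [Hr Hb]].
  set (m := Rmin d1 (Rmin d2 r)). assert (Hm : 0 < m) by (repeat apply Rmin_pos; auto).
  assert (Hm1 : m <= d1) by apply Rmin_l.
  assert (Hm2 : m <= d2) by (eapply Rle_trans; [apply Rmin_r|apply Rmin_l]).
  assert (Hm3 : m <= r) by (eapply Rle_trans; [apply Rmin_r|apply Rmin_r]).
  (* both expansions hold at k = tt h for small tt, and linearity scales back to h *)
  set (tt := m / (2 * (n + 1))). assert (Htt : 0 < tt) by (apply Rdiv_lt_0_compat; lra).
  set (k := vscal tt h).
  assert (Hk : vnorm k = tt * n) by (unfold k; rewrite vnorm_scal, Rabs_right by lra; auto).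
  assert (Hkm : tt * n < m).
  { apply Rle_lt_trans with (tt * (n + 1)); [apply Rmult_le_compat_l; lra|].
    replace (tt * (n + 1)) with (m / 2) by (unfold tt; field; lra). lra. }
  assert (HUk : U (vadd x k)) by (apply Hb; rewrite vadd_sub_cancel_l; lra).
  specialize (Hf1 k ltac:(lra) HUk). specialize (Hf2 k ltac:(lra) HUk).
  assert (Hb2 : vnorm (vsub (L1 k) (L2 k)) <= 2 * e1 * (tt * n)).
  { rewrite <- (vsub_sub_l _ (vsub (f (vadd x k)) (f x))).
    eapply Rle_trans; [apply vnorm_sub_le|]. rewrite Hk in *. lra. }
  unfold k in Hb2. rewrite (lin_scal HL1), (lin_scal HL2), <- vscal_sub_r, vnorm_scal,
    Rabs_right in Hb2 by lra.
  assert (vnorm (vsub (L1 h) (L2 h)) <= 2 * e1 * n) by (apply (Rmult_le_reg_l tt); auto; lra).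
  assert (2 * e1 * n <= eps).
  { unfold e1. replace (2 * (eps / (2 * (n + 1))) * n) with (eps * (n / (n + 1))) by (field; lra).
    assert (n / (n + 1) <= 1) by (apply Rmult_le_reg_r with (n + 1); [lra|field_simplify; lra]).
    nra. }
  lra.
Qed.

Lemma frechet_restrict (U V : X -> Prop) (f : X -> Y) x L : (forall u, V u -> U u) ->
  frechet_at U f x L -> frechet_at V f x L.
Proof.
  intros HVU [HL H]. split; auto. intros eps He. destruct (H eps He) as [d [Hd Hb]].
  exists d; split; auto.
Qed.

Lemma frechet_ext (U : X -> Prop) (f1 f2 : X -> Y) x L :
  (forall u, U u -> f1 u = f2 u) -> U x -> frechet_at U f1 x L -> frechet_at U f2 x L.
Proof.
  intros He Hx [HL H]. split; auto. intros eps Heps. destruct (H eps Heps) as [d [Hd Hb]].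
  exists d; split; auto. intros h Hh HU. rewrite <- !He; auto.
Qed.

Lemma frechet_id (U : X -> Prop) x : frechet_at U (fun u => u) x (fun h => h).
Proof.
  split.
  - split; [|split]; auto. exists 1. split; [lra|]. intros; lra.
  - intros eps He. exists 1. split; [lra|]. intros h _ _.
    rewrite vadd_sub_cancel_l, vsub_self, vnorm_0. pose proof (vnorm_nonneg _ h). nra.
Qed.

Lemma frechet_comp (U : X -> Prop) (V : Y -> Prop) (f : X -> Y) (g : Y -> Z) x L M :
  frechet_at U f x L -> frechet_at V g (f x) M -> (forall u, U u -> V (f u)) ->
  frechet_at U (fun u => g (f u)) x (fun h => M (L h)).
Proof.
  intros [HL Hf] Hg HUV. split; [apply lin_comp; auto; apply Hg|].
  destruct (lin_bound HL) as [C [_ HC]].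
  exact (little_o_chain vnorm (fun h => U (vadd x h)) (fun h => f (vadd x h)) L (f x) C V g M
           HC Hf Hg (fun h Hh => HUV _ Hh)).
Qed.
End Frechet.

Definition continuous_curve {X : BanachSpace} (I : R -> Prop) (c : R -> X) :=
  forall t, I t -> forall eps, 0 < eps -> exists delta, 0 < delta /\
    forall t', I t' -> Rabs (t' - t) < delta -> vnorm (vsub (c t') (c t)) < eps.

Definition is_interval (I : R -> Prop) := forall a b t, I a -> I b -> a <= t <= b -> I t.

Lemma continuous_curve_sub {X : BanachSpace} (I J : R -> Prop) (c : R -> X) :
  (forall t, J t -> I t) -> continuous_curve I c -> continuous_curve J c.
Proof.
  intros HJ H t Ht eps He. destruct (H t (HJ t Ht) eps He) as [d [Hd Hc]].
  exists d; split; auto.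
Qed.

Section Curves.
Variables X Y : BanachSpace.
Variable J : R -> Prop.

Lemma curve_deriv_continuous (c : R -> X) (v : R -> X) :
  (forall t, J t -> curve_deriv_at J c t (v t)) -> continuous_curve J c.
Proof.
  intros H t Ht eps He. destruct (H t Ht 1 Rlt_0_1) as [d [Hd Hb]].
  pose proof (vnorm_nonneg _ (v t)) as Hv. set (K := vnorm (v t) + 1).
  exists (Rmin d (eps / K)). split; [apply Rmin_pos; auto; apply Rdiv_lt_0_compat; unfold K; lra|].
  intros t' Ht' Htt. pose proof (Rmin_l d (eps / K)). pose proof (Rmin_r d (eps / K)).
  specialize (Hb (t' - t) ltac:(lra)). replace (t + (t' - t)) with t' in Hb by ring.
  specialize (Hb Ht').
  pose proof (vnorm_sub_ge _ (vsub (c t') (c t)) (vscal (t' - t) (v t))) as Htri.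
  rewrite vnorm_scal in Htri.
  assert (Rabs (t' - t) * K < eps).
  { apply (Rmult_lt_compat_r K) in Htt; [|unfold K; lra].
    eapply Rlt_le_trans; [apply Htt|]. apply Rle_trans with (eps / K * K).
    apply Rmult_le_compat_r; [unfold K|]; lra. right; field; unfold K; lra. }
  unfold K in *. pose proof (Rabs_pos (t' - t)). nra.
Qed.

Lemma curve_deriv_comp (U : X -> Prop) (c : R -> X) (f : X -> Y) t v L :
  curve_deriv_at J c t v -> frechet_at U f (c t) L -> (forall s, J s -> U (c s)) ->
  curve_deriv_at J (fun s => f (c s)) t (L v).
Proof.
  intros Hc Hf HU.
  assert (Hl : forall s, vnorm (vscal s v) <= vnorm v * Rabs s)
    by (intro s; rewrite vnorm_scal, Rmult_comm; apply Rle_refl).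
  pose proof (little_o_chain Rabs (fun s => J (t + s)) (fun s => c (t + s)) (fun s => vscal s v)
                (c t) (vnorm v) U f L Hl Hc Hf (fun s Hs => HU _ Hs)) as H.
  revert H. apply little_o_le. intros s _. rewrite (lin_scal (proj1 Hf)). apply Rle_refl.
Qed.

Lemma curve_deriv_sub (u1 u2 : R -> Y) t a b :
  curve_deriv_at J u1 t a -> curve_deriv_at J u2 t b ->
  curve_deriv_at J (fun s => vsub (u1 s) (u2 s)) t (vsub a b).
Proof.
  intros H1 H2. pose proof (little_o_sub _ _ H1 H2) as H. revert H. apply little_o_le.
  intros s _. rewrite vsub_sub_swap, vscal_sub_r, vsub_sub_swap. apply Rle_refl.
Qed.

Lemma curve_deriv_const (w : Y) t : curve_deriv_at J (fun _ => w) t vzero.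
Proof.
  intros eps He. exists 1. split; [lra|]. intros s _ _.
  rewrite vsub_self, vscal_0r, vsub_self, vnorm_0. pose proof (Rabs_pos s). nra.
Qed.

Lemma curve_deriv_scal (a : R -> R) (w : R -> Y) t a' v :
  derivable_pt_lim a t a' -> curve_deriv_at J w t v ->
  curve_deriv_at J (fun s => vscal (a s) (w s)) t
    (vadd (vscal a' (w t)) (vscal (a t) v)).
Proof.
  intros Ha Hw eps He.
  set (nw := vnorm (w t)). set (nv := vnorm v). set (K := Rabs (a t) + 1).
  assert (Hnw : 0 <= nw) by apply vnorm_nonneg. assert (Hnv : 0 <= nv) by apply vnorm_nonneg.
  assert (HK : 1 <= K) by (pose proof (Rabs_pos (a t)); unfold K; lra).
  destruct (Hw (eps / (3 * K))) as [d1 [Hd1 Hb1]]; [apply Rdiv_lt_0_compat; lra|].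
  destruct (derivable_pt_lim_little_o a t a' Ha (eps / (3 * (nw + 1)))) as [d2 [Hd2 Hb2]];
    [apply Rdiv_lt_0_compat; lra|].
  destruct (derivable_pt_lim_cont a t a' Ha (Rmin 1 (eps / (3 * (nv + 1))))) as [d3 [Hd3 Hb3]];
    [apply Rmin_pos; [lra|apply Rdiv_lt_0_compat; lra]|].
  exists (Rmin d1 (Rmin d2 d3)). split; [repeat apply Rmin_pos; auto|].
  intros s Hs HJ. pose proof (Rabs_pos s) as Hs0.
  specialize (Hb1 s (Rlt_le_trans _ _ _ Hs (Rmin_l _ _)) HJ).
  specialize (Hb2 s (Rlt_le_trans _ _ _ Hs (Rle_trans _ _ _ (Rmin_r _ _) (Rmin_l _ _)))).
  specialize (Hb3 (t + s)). replace (t + s - t) with s in Hb3 by ring.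
  specialize (Hb3 (Rlt_le_trans _ _ _ Hs (Rle_trans _ _ _ (Rmin_r _ _) (Rmin_r _ _)))).
  pose proof (Rmin_l 1 (eps / (3 * (nv + 1)))). pose proof (Rmin_r 1 (eps / (3 * (nv + 1)))).
  set (a1 := a (t + s)) in *. set (a0 := a t) in *.
  set (r := vsub (vsub (w (t + s)) (w t)) (vscal s v)) in Hb1.
  assert (Hid : vsub (vsub (vscal a1 (w (t + s))) (vscal a0 (w t)))
                  (vscal s (vadd (vscal a' (w t)) (vscal a0 v)))
              = vadd (vadd (vscal a1 r) (vscal (a1 - a0 - s * a') (w t)))
                     (vscal (s * (a1 - a0)) v)).
  { unfold r. rewrite !vscal_sub_r, !vscal_sub_l, !vscal_assoc.
    replace (s * (a1 - a0)) with (a1 * s - s * a0) by ring.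
    rewrite vscal_sub_l, vsub_telescope, vscal_distr_v, !vscal_assoc. reflexivity. }
  rewrite Hid. eapply Rle_trans; [apply vnorm_triangle|].
  eapply Rle_trans; [apply Rplus_le_compat_r, vnorm_triangle|]. rewrite !vnorm_scal.
  fold nw nv. rewrite Rabs_mult.
  assert (Ha1 : Rabs a1 <= K) by (pose proof (Rabs_triang_inv a1 a0); unfold K; lra).
  assert (T1 : Rabs a1 * vnorm r <= eps / 3 * Rabs s).
  { apply Rle_trans with (K * (eps / (3 * K) * Rabs s)).
    apply Rmult_le_compat; auto; [apply Rabs_pos|apply vnorm_nonneg].
    right; field; lra. }
  assert (T2 : Rabs (a1 - a0 - s * a') * nw <= eps / 3 * Rabs s).
  { apply Rle_trans with (eps / (3 * (nw + 1)) * Rabs s * (nw + 1)).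
    apply Rmult_le_compat; auto; try lra; apply Rabs_pos. right; field; lra. }
  assert (T3 : Rabs s * Rabs (a1 - a0) * nv <= eps / 3 * Rabs s).
  { rewrite Rmult_assoc, (Rmult_comm (eps / 3)). apply Rmult_le_compat_l; auto.
    apply Rle_trans with (eps / (3 * (nv + 1)) * (nv + 1)); [|right; field; lra].
    apply Rmult_le_compat; try lra; apply Rabs_pos. }
  lra.
Qed.
End Curves.

Lemma Rle_of_le_plus_eps a b : (forall e, 0 < e -> a <= b + e) -> a <= b.
Proof.
  intro H. destruct (Rle_dec a b) as [|Hn]; auto. apply Rnot_le_lt in Hn.
  specialize (H ((a - b) / 2) ltac:(lra)). lra.
Qed.

Lemma real_induction (a b : R) (P : R -> Prop) : a <= b -> P a ->
  (forall s, a <= s < b -> P s -> exists d, 0 < d /\ forall u, s < u < s + d -> u <= b -> P u) ->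
  (forall s, a < s <= b -> (forall u, a <= u < s -> P u) -> P s) ->
  forall u, a <= u <= b -> P u.
Proof.
  intros Hab Ha Hstep Hclosed.
  set (A := fun u => a <= u <= b /\ forall v, a <= v <= u -> P v).
  assert (HA : A a) by (split; [lra|intros v Hv; replace v with a by lra; auto]).
  assert (Hbd : bound A) by (exists b; intros u [Hu _]; lra).
  destruct (completeness A Hbd (ex_intro _ a HA)) as [s [Hub Hlub]].
  assert (Hs : a <= s <= b) by (split; [apply Hub; auto|apply Hlub; intros u [Hu _]; lra]).
  assert (Hbelow : forall v, a <= v < s -> P v).
  { intros v Hv. apply NNPP. intro Hn. assert (s <= v); [|lra].
    apply Hlub. intros u [Hu Hu']. destruct (Rle_dec u v) as [|Hl]; auto.
    exfalso. apply Hn, Hu'. lra. }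
  assert (HAs : A s).
  { split; auto. intros v Hv. destruct (Rlt_dec v s); [apply Hbelow; lra|].
    replace v with s by lra. destruct (Req_dec s a) as [->|]; auto. apply Hclosed; auto; lra. }
  destruct (Req_dec s b) as [<-|Hsb]; [intros u Hu; apply HAs; lra|]. exfalso.
  destruct (Hstep s ltac:(lra) (proj2 HAs s ltac:(lra))) as [d [Hd Hu]].
  set (u := Rmin b (s + d / 2)).
  assert (Hu1 : s < u) by (apply Rmin_glb_lt; lra).
  assert (Hu2 : u <= b) by apply Rmin_l. assert (Hu3 : u <= s + d / 2) by apply Rmin_r.
  assert (A u).
  { split; [lra|]. intros v Hv. destruct (Rle_dec v s); [apply HAs; lra|]. apply Hu; lra. }
  specialize (Hub u H). lra.
Qed.

Lemma locally_constant_interval (lo hi : R) (P : R -> Prop) :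
  (forall s, lo <= s <= hi -> exists eta, 0 < eta /\
     forall u v, lo <= u <= hi -> lo <= v <= hi -> Rabs (u - s) < eta -> Rabs (v - s) < eta ->
       P u -> P v) ->
  forall u v, lo <= u <= hi -> lo <= v <= hi -> P u -> P v.
Proof.
  intros Hloc u v Hu Hv Pu.
  assert (Hiff : forall w, lo <= w <= hi -> (P w <-> P lo)).
  { apply (real_induction lo hi (fun w => P w <-> P lo)); [lra|tauto| |].
    - intros s Hs Hps. destruct (Hloc s ltac:(lra)) as [eta [He H]].
      exists eta. split; auto. intros w Hw Hwb. rewrite <- Hps.
      assert (Rabs (w - s) < eta) by (apply Rabs_def1; lra).
      assert (Rabs (s - s) < eta) by (rewrite Rminus_diag_eq, Rabs_R0; auto).
      split; apply H; auto; lra.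
    - intros s Hs Hbelow. destruct (Hloc s ltac:(lra)) as [eta [He H]].
      set (w := Rmax lo (s - eta / 2)).
      assert (Hw : lo <= w < s) by (split; [apply Rmax_l|apply Rmax_lub_lt; lra]).
      assert (Rabs (w - s) < eta).
      { assert (s - eta / 2 <= w) by apply Rmax_r. apply Rabs_def1; lra. }
      assert (Rabs (s - s) < eta) by (rewrite Rminus_diag_eq, Rabs_R0; auto).
      rewrite <- (Hbelow w Hw). split; apply H; auto; lra. }
  apply (Hiff v Hv), (Hiff u Hu), Pu.
Qed.

Lemma curve_deriv_zero_const_le {Y : BanachSpace} (J : R -> Prop) (z : R -> Y) a b :
  is_interval J -> (forall t, J t -> curve_deriv_at J z t vzero) -> J a -> J b -> a <= b ->
  z a = z b.
Proof.
  intros HI Hd Ha Hb Hab.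
  assert (HJ : forall u, a <= u <= b -> J u) by (intros; apply (HI a b); auto).
  assert (Hgrowth : forall e, 0 < e -> forall u, a <= u <= b ->
            vnorm (vsub (z u) (z a)) <= e * (u - a)).
  { intros e He. apply real_induction; auto.
    - rewrite vsub_self, vnorm_0. lra.
    - intros s Hs Hps. destruct (Hd s (HJ s ltac:(lra)) e He) as [d [Hdp Hz]].
      exists d. split; auto. intros u Hu Hub.
      specialize (Hz (u - s)). replace (s + (u - s)) with u in Hz by ring.
      rewrite vscal_0r, vsub_0r, Rabs_right in Hz by lra.
      specialize (Hz ltac:(lra) (HJ u ltac:(lra))).
      pose proof (vsub_triangle _ (z u) (z s) (z a)). lra.
    - intros s Hs Hbelow. apply Rle_of_le_plus_eps. intros eta Heta.
      destruct (curve_deriv_continuous Y J z (fun _ => vzero) Hd s (HJ s ltac:(lra)) eta Heta)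
        as [d [Hdp Hz]].
      set (w := Rmax a (s - d / 2)).
      assert (Hw : a <= w < s) by (split; [apply Rmax_l|apply Rmax_lub_lt; lra]).
      assert (Hws : Rabs (w - s) < d).
      { assert (s - d / 2 <= w) by apply Rmax_r. apply Rabs_def1; lra. }
      specialize (Hz w (HJ w ltac:(lra)) Hws). specialize (Hbelow w Hw).
      pose proof (vsub_triangle _ (z s) (z w) (z a)). rewrite vnorm_sub_sym in Hz.
      assert (e * (w - a) <= e * (s - a)) by (apply Rmult_le_compat_l; lra). lra. }
  symmetry. apply veq_of_small. intros eps He.
  eapply Rle_trans; [apply (Hgrowth (eps / (b - a + 1))); [apply Rdiv_lt_0_compat|]; lra|].
  apply Rle_trans with (eps / (b - a + 1) * (b - a + 1)); [|right; field; lra].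
  apply Rmult_le_compat_l; [apply Rlt_le, Rdiv_lt_0_compat|]; lra.
Qed.

Lemma curve_deriv_zero_const {Y : BanachSpace} (J : R -> Prop) (z : R -> Y) a b :
  is_interval J -> (forall t, J t -> curve_deriv_at J z t vzero) -> J a -> J b -> z a = z b.
Proof.
  intros HI Hd Ha Hb. destruct (Rle_dec a b).
  - apply (curve_deriv_zero_const_le J); auto.
  - symmetry. apply (curve_deriv_zero_const_le J); auto. lra.
Qed.

Definition jointly_continuous {X : BanachSpace} (E : X -> R -> Prop) (P : X -> R -> X) :=
  forall x t, E x t -> forall eps, 0 < eps -> exists delta, 0 < delta /\
     forall x' t', E x' t' -> vnorm (vsub x' x) < delta -> Rabs (t' - t) < delta ->
       vnorm (vsub (P x' t') (P x t)) < eps.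

Lemma jointly_continuous_section {X : BanachSpace} (E : X -> R -> Prop) (P : X -> R -> X) x :
  jointly_continuous E P -> continuous_curve (E x) (P x).
Proof.
  intros Hc t Ht eps He. destruct (Hc x t Ht eps He) as [d [Hd H]].
  exists d; split; auto. intros t' Ht' Htt. apply H; auto. rewrite vsub_self, vnorm_0; auto.
Qed.

Lemma jointly_continuous_local {X : BanachSpace} (E W : X -> R -> Prop) (P Q : X -> R -> X) x t :
  is_open_XR E -> jointly_continuous E P -> (forall x t, E x t -> Q x t = P x t) -> E x t ->
  forall eps, 0 < eps -> exists delta, 0 < delta /\
    forall x' t', W x' t' -> vnorm (vsub x' x) < delta -> Rabs (t' - t) < delta ->
      vnorm (vsub (Q x' t') (Q x t)) < eps.
Proof.
  intros HO Hc HQ Ht eps He.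
  destruct (HO x t Ht) as [e1 [He1 Hb]]. destruct (Hc x t Ht eps He) as [e2 [He2 Hc2]].
  exists (Rmin e1 e2). split; [apply Rmin_pos; auto|].
  intros x' t' _ Hx Ht'. pose proof (Rmin_l e1 e2). pose proof (Rmin_r e1 e2).
  assert (E x' t') by (apply Hb; lra). rewrite !HQ by auto. apply Hc2; auto; lra.
Qed.

Lemma box_open {X : BanachSpace} (c : X) rho a b :
  is_open_XR (fun x t => vnorm (vsub x c) < rho /\ a < t < b).
Proof.
  intros x t [Hx Ht]. exists (Rmin (rho - vnorm (vsub x c)) (Rmin (t - a) (b - t))).
  split; [repeat apply Rmin_pos; lra|].
  pose proof (Rmin_l (rho - vnorm (vsub x c)) (Rmin (t - a) (b - t))).
  pose proof (Rmin_r (rho - vnorm (vsub x c)) (Rmin (t - a) (b - t))).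
  pose proof (Rmin_l (t - a) (b - t)). pose proof (Rmin_r (t - a) (b - t)).
  intros x' t' Hx' Ht'. split.
  - pose proof (vsub_triangle _ x' x c). lra.
  - apply Rabs_def2 in Ht'. lra.
Qed.

Lemma chart_inverse {X Y : BanachSpace} (f : X -> Y) (U : X -> Prop) (g : Y -> X) q :
  injective_on U f -> (forall v, image f U v -> U (g v) /\ f (g v) = v) -> U q -> g (f q) = q.
Proof.
  intros Hinj Hg Hq. assert (Hi : image f U (f q)) by (exists q; auto).
  destruct (Hg _ Hi) as [H1 H2]. apply Hinj; auto.
Qed.

Section Lifts.
Variables X Y : BanachSpace.
Variable D : X -> Prop.
Variable f : X -> Y.
Variable y0 : Y.
Hypothesis Hloc : local_homeomorphism D f.

Lemma local_homeomorphism_continuous x : D x -> forall eps, 0 < eps -> exists delta, 0 < delta /\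
  forall x', vnorm (vsub x' x) < delta -> D x' /\ vnorm (vsub (f x') (f x)) < eps.
Proof.
  intros Hx eps He.
  destruct (Hloc x Hx) as [U [HUo [HUD [HUx [_ [_ [Hfc _]]]]]]].
  destruct (HUo x HUx) as [r [Hr Hb]]. destruct (Hfc x HUx eps He) as [d [Hd Hc]].
  exists (Rmin r d). split; [apply Rmin_pos; auto|].
  intros x' Hx'. pose proof (Rmin_l r d). pose proof (Rmin_r r d).
  assert (U x') by (apply Hb; lra). split; auto. apply Hc; auto; lra.
Qed.

Lemma Psi_f_continuous x t : D x -> forall eps, 0 < eps -> exists delta, 0 < delta /\
  forall x' t', vnorm (vsub x' x) < delta -> Rabs (t' - t) < delta ->
    D x' /\ vnorm (vsub (Psi y0 (f x') t') (Psi y0 (f x) t)) < eps.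
Proof.
  intros Hx eps He.
  destruct (Psi_cont Y y0 (f x) t eps He) as [dp [Hdp Hp]].
  destruct (local_homeomorphism_continuous x Hx dp Hdp) as [df [Hdf Hf]].
  exists (Rmin dp df). split; [apply Rmin_pos; auto|].
  intros x' t' Hx' Ht'. pose proof (Rmin_l dp df). pose proof (Rmin_r dp df).
  destruct (Hf x' ltac:(lra)) as [HD' Hf']. split; auto. apply Hp; lra.
Qed.

(** The set where [c1] and [c2] agree is open by local injectivity of [f] and closed by
    continuity. *)
Lemma lift_unique (I : R -> Prop) (c1 c2 : R -> X) t0 t1 :
  is_interval I -> continuous_curve I c1 -> continuous_curve I c2 ->
  (forall t, I t -> D (c1 t) /\ D (c2 t)) -> (forall t, I t -> f (c1 t) = f (c2 t)) ->
  I t0 -> c1 t0 = c2 t0 -> I t1 -> c1 t1 = c2 t1.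
Proof.
  intros HI Hc1 Hc2 HD Hf H0 Heq0 H1.
  set (lo := Rmin t0 t1). set (hi := Rmax t0 t1).
  assert (HIlh : forall s, lo <= s <= hi -> I s).
  { intros s Hs. unfold lo, hi, Rmin, Rmax in Hs.
    destruct (Rle_dec t0 t1); [apply (HI t0 t1)|apply (HI t1 t0)]; auto; lra. }
  apply (locally_constant_interval lo hi (fun s => c1 s = c2 s)) with t0; auto;
    [|split; [apply Rmin_l|apply Rmax_l]|split; [apply Rmin_r|apply Rmax_r]].
  intros s Hs. specialize (HIlh s Hs) as HIs.
  destruct (classic (c1 s = c2 s)) as [Heq|Hne].
  - destruct (Hloc (c1 s)) as [U [HUo [_ [HUp [_ [Hinj _]]]]]]; [apply HD; auto|].
    destruct (HUo _ HUp) as [r [Hr HUb]].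
    destruct (Hc1 s HIs r Hr) as [d1 [Hd1 Hcc1]]. destruct (Hc2 s HIs r Hr) as [d2 [Hd2 Hcc2]].
    exists (Rmin d1 d2). split; [apply Rmin_pos; auto|].
    intros u v _ Hv _ Hvs _. pose proof (Rmin_l d1 d2). pose proof (Rmin_r d1 d2).
    apply Hinj; [apply HUb, Hcc1; auto; lra|apply HUb; rewrite Heq; apply Hcc2; auto; lra|].
    apply Hf; auto.
  - set (delta := vnorm (vsub (c1 s) (c2 s))).
    assert (Hdelta : 0 < delta).
    { destruct (vnorm_nonneg _ (vsub (c1 s) (c2 s))) as [|H]; auto.
      exfalso. apply Hne, vsub_eq, vnorm_eq0. auto. }
    destruct (Hc1 s HIs (delta / 2) ltac:(lra)) as [d1 [Hd1 Hcc1]].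
    destruct (Hc2 s HIs (delta / 2) ltac:(lra)) as [d2 [Hd2 Hcc2]].
    exists (Rmin d1 d2). split; [apply Rmin_pos; auto|].
    intros u v Hu _ Hus _ Heq. exfalso.
    pose proof (Rmin_l d1 d2). pose proof (Rmin_r d1 d2).
    specialize (Hcc1 u (HIlh u Hu) ltac:(lra)). specialize (Hcc2 u (HIlh u Hu) ltac:(lra)).
    rewrite Heq in Hcc1. rewrite vnorm_sub_sym in Hcc1.
    pose proof (vsub_triangle _ (c1 s) (c2 u) (c2 s)) as Htri. fold delta in Htri. lra.
Qed.

Record psi_patch (E : X -> R -> Prop) (P : X -> R -> X) : Prop := {
  patch_dom : forall x t, E x t -> D x;
  patch_open : is_open_XR E;
  patch_in_D : forall x t, E x t -> D (P x t);
  patch_cont : jointly_continuous E P;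
  patch_interval : forall x, is_interval (E x);
  patch_conj : conjugates f y0 E P }.

(** A flow in [D] conjugating [f] to [Psi], except for the group law (iv), which the
    maximal lift satisfies automatically ([max_flow_is_flow]). *)
Record psi_lift (E : X -> R -> Prop) (P : X -> R -> X) : Prop := {
  lift_patch :> psi_patch E P;
  lift_zero : forall x t, E x t -> E x 0;
  lift_init : forall x, E x 0 -> P x 0 = x }.

Lemma psi_lift_agree E1 P1 E2 P2 x t : psi_lift E1 P1 -> psi_lift E2 P2 ->
  E1 x t -> E2 x t -> P1 x t = P2 x t.
Proof.
  intros G1 G2 H1 H2.
  apply (lift_unique (fun s => E1 x s /\ E2 x s) (P1 x) (P2 x) 0 t).
  - intros a b s [Ha1 Ha2] [Hb1 Hb2] Hs.
    split; [apply (patch_interval _ _ G1 x a b)|apply (patch_interval _ _ G2 x a b)]; auto.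
  - eapply continuous_curve_sub; [|apply jointly_continuous_section, (patch_cont _ _ G1)].
    simpl; tauto.
  - eapply continuous_curve_sub; [|apply jointly_continuous_section, (patch_cont _ _ G2)].
    simpl; tauto.
  - intros s [Hs1 Hs2]. split; [apply (patch_in_D _ _ G1)|apply (patch_in_D _ _ G2)]; auto.
  - intros s [Hs1 Hs2]. rewrite (patch_conj _ _ G1), (patch_conj _ _ G2); auto.
  - split; [apply (lift_zero _ _ G1 x t)|apply (lift_zero _ _ G2 x t)]; auto.
  - rewrite (lift_init _ _ G1), (lift_init _ _ G2);
      [reflexivity|apply (lift_zero _ _ G2 x t)|apply (lift_zero _ _ G1 x t)]; auto.
  - split; auto.
Qed.

Definition max_dom x t := exists E P, psi_lift E P /\ E x t.

(** By [psi_lift_agree] the value does not depend on the chosen lift. *)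
Definition max_flow x t : X :=
  epsilon (inhabits x) (fun p => exists E P, psi_lift E P /\ E x t /\ P x t = p).

Lemma max_flow_eq E P x t : psi_lift E P -> E x t -> max_flow x t = P x t.
Proof.
  intros G H. unfold max_flow.
  destruct (epsilon_spec (inhabits x) (fun p => exists E P, psi_lift E P /\ E x t /\ P x t = p))
    as [E' [P' [G' [H' Hp]]]]; [exists (P x t), E, P; auto|].
  rewrite <- Hp. eapply psi_lift_agree; eauto.
Qed.

Lemma max_lift : psi_lift max_dom max_flow.
Proof.
  split; [split| |].
  - intros x t [E [P [G H]]]. eapply (patch_dom _ _ G); eauto.
  - intros x t [E [P [G H]]]. destruct (patch_open _ _ G x t H) as [e [He Hb]].
    exists e; split; auto. intros x' t' H1 H2. exists E, P; split; auto.
  - intros x t [E [P [G H]]]. rewrite (max_flow_eq E P) by auto. eapply (patch_in_D _ _ G); eauto.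
  - intros x t [E [P [G H]]].
    apply (jointly_continuous_local E _ P); auto;
      [apply (patch_open _ _ G)|apply (patch_cont _ _ G)|].
    intros; apply (max_flow_eq E P); auto.
  - intros x a b t [E1 [P1 [G1 H1]]] [E2 [P2 [G2 H2]]] Ht. destruct (Rle_dec 0 t).
    + exists E2, P2; split; auto.
      apply (patch_interval _ _ G2 x 0 b); [apply (lift_zero _ _ G2 x b)|..]; auto. lra.
    + exists E1, P1; split; auto.
      apply (patch_interval _ _ G1 x a 0); [|apply (lift_zero _ _ G1 x a)|]; auto. lra.
  - intros x t [E [P [G H]]]. rewrite (max_flow_eq E P) by auto. apply (patch_conj _ _ G); auto.
  - intros x t [E [P [G H]]]. exists E, P; split; auto. apply (lift_zero _ _ G x t); auto.
  - intros x [E [P [G H]]]. rewrite (max_flow_eq E P) by auto. apply (lift_init _ _ G); auto.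
Qed.

Lemma psi_lift_le_max E P x t : psi_lift E P -> E x t -> max_dom x t.
Proof. intros; exists E, P; auto. Qed.

Lemma psi_lift_glue E P B Q : psi_lift E P -> psi_patch B Q ->
  (forall x t, B x t -> E x t -> P x t = Q x t) ->
  (forall x t, B x t -> exists t', E x t' /\ B x t') ->
  psi_lift (fun x t => E x t \/ B x t)
    (fun x t => if excluded_middle_informative (E x t) then P x t else Q x t).
Proof.
  intros G H Hagree Hmeet.
  set (R := fun x t => if excluded_middle_informative (E x t) then P x t else Q x t).
  assert (RE : forall x t, E x t -> R x t = P x t).
  { intros x t Ht. unfold R. destruct (excluded_middle_informative (E x t)); tauto. }
  assert (RB : forall x t, B x t -> R x t = Q x t).
  { intros x t Ht. unfold R. destruct (excluded_middle_informative (E x t)); auto. }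
  split; [split| |].
  - intros x t [Ht|Ht]; [apply (patch_dom _ _ G x t)|apply (patch_dom _ _ H x t)]; auto.
  - intros x t [Ht|Ht].
    + destruct (patch_open _ _ G x t Ht) as [e [He Hb]]. exists e; split; auto.
    + destruct (patch_open _ _ H x t Ht) as [e [He Hb]]. exists e; split; auto.
  - intros x t [Ht|Ht]; [rewrite RE|rewrite RB]; auto;
      [apply (patch_in_D _ _ G)|apply (patch_in_D _ _ H)]; auto.
  - intros x t Ht. destruct (classic (E x t)) as [HE|HE].
    + apply (jointly_continuous_local E _ P); auto;
        [apply (patch_open _ _ G)|apply (patch_cont _ _ G)].
    + apply (jointly_continuous_local B _ Q);
        [apply (patch_open _ _ H)|apply (patch_cont _ _ H)|auto|tauto].
  - intros x a b t Ha Hb Ht. destruct (classic (exists t', E x t' /\ B x t')) as [[c [Hc1 Hc2]]|Hn].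
    + destruct (Rle_dec t c).
      * destruct Ha as [Ha|Ha]; [left; apply (patch_interval _ _ G x a c)
                                 |right; apply (patch_interval _ _ H x a c)]; auto; lra.
      * destruct Hb as [Hb|Hb]; [left; apply (patch_interval _ _ G x c b)
                                 |right; apply (patch_interval _ _ H x c b)]; auto; lra.
    + destruct Ha as [Ha|Ha]; [|exfalso; apply Hn; eauto].
      destruct Hb as [Hb|Hb]; [|exfalso; apply Hn; eauto].
      left. apply (patch_interval _ _ G x a b); auto.
  - intros x t [Ht|Ht]; [rewrite RE|rewrite RB]; auto;
      [apply (patch_conj _ _ G)|apply (patch_conj _ _ H)]; auto.
  - intros x t [Ht|Ht]; left; [apply (lift_zero _ _ G x t)|]; auto.
    destruct (Hmeet x t Ht) as [t' [Ht' _]]. apply (lift_zero _ _ G x t'); auto.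
  - intros x Hx0. assert (HE0 : E x 0).
    { destruct Hx0 as [|HB]; auto. destruct (Hmeet x 0 HB) as [t' [Ht' _]].
      apply (lift_zero _ _ G x t'); auto. }
    rewrite RE by auto. apply (lift_init _ _ G); auto.
Qed.

Lemma chart_box (U : X -> Prop) (g : Y -> X) c rho a b :
  (forall u, U u -> D u) -> (forall v, image f U v -> U (g v) /\ f (g v) = v) ->
  continuous_on (image f U) g ->
  (forall x t, vnorm (vsub x c) < rho -> a < t < b -> D x /\ image f U (Psi y0 (f x) t)) ->
  psi_patch (fun x t => vnorm (vsub x c) < rho /\ a < t < b) (fun x t => g (Psi y0 (f x) t)).
Proof.
  intros HUD Hg Hgc HB. split.
  - intros x t [H1 H2]. apply (HB x t); auto.
  - apply box_open.
  - intros x t [H1 H2]. apply HUD, Hg, HB; auto.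
  - intros x t [H1 H2] eps He.
    destruct (HB x t H1 H2) as [Hx HV].
    destruct (Hgc _ HV eps He) as [dg [Hdg Hgd]].
    destruct (Psi_f_continuous x t Hx dg Hdg) as [d [Hd Hp]].
    exists d. split; auto. intros x' t' [H1' H2'] Hx' Ht'.
    apply Hgd; [apply HB; auto|apply Hp; auto].
  - intros x a' b' t [Ha1 Ha2] [Hb1 Hb2] Ht. split; auto; lra.
  - intros x t [H1 H2]. apply Hg, HB; auto.
Qed.

Lemma max_dom_zero x : D x -> max_dom x 0.
Proof.
  intro Hx.
  destruct (Hloc x Hx) as [U [HUo [HUD [HUx [HVo [Hinj [_ [g [Hg Hgc]]]]]]]]].
  destruct (HVo (f x)) as [e1 [He1 HV]]; [exists x; auto|].
  destruct (Psi_f_continuous x 0 Hx e1 He1) as [d [Hd Hp]]. rewrite Psi_0 in Hp.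
  destruct (HUo x HUx) as [r [Hr Hb]].
  set (rho := Rmin d r). assert (Hrho : 0 < rho) by (apply Rmin_pos; auto).
  assert (Hrd : rho <= d) by apply Rmin_l. assert (Hrr : rho <= r) by apply Rmin_r.
  assert (Hbox : forall x' t, vnorm (vsub x' x) < rho -> - rho < t < rho ->
                   D x' /\ image f U (Psi y0 (f x') t)).
  { intros x' t H1 H2. destruct (Hp x' t) as [HD' Hf']; try lra.
    - rewrite Rminus_0_r. apply Rabs_def1; lra.
    - split; auto. }
  apply (psi_lift_le_max (fun x' t => vnorm (vsub x' x) < rho /\ - rho < t < rho)
           (fun x' t => g (Psi y0 (f x') t)));
    [|split; [rewrite vsub_self, vnorm_0|]; lra].
  split.
  - apply (chart_box U g); auto.
  - intros x' t [H1 H2]. split; auto; lra.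
  - intros x' [H1 H2]. rewrite Psi_0. apply (chart_inverse f U); auto. apply Hb. lra.
Qed.

Lemma max_flow_on_chart x a b tau t (U : X -> Prop) (g : Y -> X) :
  (forall u, U u -> D u) -> injective_on U f -> (forall v, image f U v -> U (g v) /\ f (g v) = v) ->
  continuous_curve (fun s => a < s < b) (fun s => g (Psi y0 (f x) s)) ->
  (forall s, a < s < b -> image f U (Psi y0 (f x) s)) ->
  max_dom x tau -> U (max_flow x tau) -> a < tau < b -> max_dom x t -> a < t < b ->
  max_flow x t = g (Psi y0 (f x) t).
Proof.
  intros HUD Hinj Hg Hc HV Htau HU Htab Ht Htb. pose proof max_lift as M.
  apply (lift_unique (fun s => max_dom x s /\ a < s < b) (max_flow x) (fun s => g (Psi y0 (f x) s))
           tau t); [| | | | |split; auto| |split; auto].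
  - intros u v w [Hu1 Hu2] [Hv1 Hv2] Hw. split; [apply (patch_interval _ _ M x u v)|]; auto; lra.
  - eapply continuous_curve_sub; [|apply jointly_continuous_section, (patch_cont _ _ M)].
    simpl; tauto.
  - eapply continuous_curve_sub; [|apply Hc]. simpl; tauto.
  - intros s [Hs1 Hs2]. split; [apply (patch_in_D _ _ M)|apply HUD, Hg, HV]; auto.
  - intros s [Hs1 Hs2]. rewrite (patch_conj _ _ M) by auto. symmetry. apply Hg, HV; auto.
  - apply Hinj; auto; [apply Hg, HV; auto|].
    rewrite (patch_conj _ _ M) by auto. symmetry. apply Hg, HV; auto.
Qed.

(** If the chart at [max_flow x tau] covers [Psi (f x) s] for all [s] in [(a, b)],
    a box around [(x, (a, b))] can be glued to the maximal lift. *)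
Lemma max_dom_extend x tau sigma a b (U : X -> Prop) (g : Y -> X) eps :
  max_dom x tau -> is_open U -> (forall u, U u -> D u) -> injective_on U f ->
  (forall v, image f U v -> U (g v) /\ f (g v) = v) -> continuous_on (image f U) g ->
  U (max_flow x tau) -> 0 < eps ->
  (forall y, vnorm (vsub y (f (max_flow x tau))) < eps -> image f U y) ->
  a < tau < b -> a < sigma < b ->
  (forall s, a < s < b -> vnorm (vsub (Psi y0 (f x) s) (f (max_flow x tau))) < eps / 2) ->
  max_dom x sigma.
Proof.
  intros Htau HUo HUD Hinj Hg Hgc HUp He HV Htab Hsab Hnear.
  pose proof max_lift as M.
  set (p := max_flow x tau) in *.
  assert (Hx : D x) by (apply (patch_dom _ _ M x tau); auto).
  set (kappa := exp (- a)). assert (Hk : 0 < kappa) by apply exp_pos.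
  destruct (patch_open _ _ M x tau Htau) as [ea [Hea Hoa]].
  destruct (HUo p HUp) as [r [Hr Hbr]].
  destruct (patch_cont _ _ M x tau Htau r Hr) as [dm [Hdm Hcm]].
  destruct (local_homeomorphism_continuous x Hx (eps / (2 * kappa))) as [dc [Hdc Hfc]];
    [apply Rdiv_lt_0_compat; lra|].
  set (rho := Rmin ea (Rmin dm dc)).
  assert (Hrho : 0 < rho) by (repeat apply Rmin_pos; auto).
  assert (Hr1 : rho <= ea) by apply Rmin_l.
  assert (Hr2 : rho <= dm) by (eapply Rle_trans; [apply Rmin_r|apply Rmin_l]).
  assert (Hr3 : rho <= dc) by (eapply Rle_trans; [apply Rmin_r|apply Rmin_r]).
  assert (Htt : forall d, 0 < d -> Rabs (tau - tau) < d)
    by (intros; rewrite Rminus_diag_eq, Rabs_R0; auto).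
  assert (Hnbhd : forall x', vnorm (vsub x' x) < rho -> max_dom x' tau /\
            U (max_flow x' tau) /\ D x' /\ vnorm (vsub (f x') (f x)) < eps / (2 * kappa)).
  { intros x' Hx'. assert (max_dom x' tau) by (apply Hoa; auto; lra).
    destruct (Hfc x' ltac:(lra)) as [HD' Hf']. repeat split; auto.
    apply Hbr, Hcm; auto; lra. }
  assert (HBV : forall x' t, vnorm (vsub x' x) < rho -> a < t < b ->
                  D x' /\ image f U (Psi y0 (f x') t)).
  { intros x' t H1 H2. destruct (Hnbhd x' H1) as [_ [_ [HD' Hf']]]. split; auto. apply HV.
    assert (vnorm (vsub (Psi y0 (f x') t) (Psi y0 (f x) t)) < eps / 2).
    { eapply Rle_lt_trans; [apply (Psi_lipschitz Y y0 _ _ t a); lra|]. fold kappa.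
      apply (Rmult_lt_compat_l kappa) in Hf'; auto.
      replace (kappa * (eps / (2 * kappa))) with (eps / 2) in Hf' by (field; lra). exact Hf'. }
    pose proof (Hnear t H2).
    pose proof (vsub_triangle _ (Psi y0 (f x') t) (Psi y0 (f x) t) (f p)). lra. }
  pose proof (chart_box U g x rho a b HUD Hg Hgc HBV) as HQ.
  set (B := fun x' t => vnorm (vsub x' x) < rho /\ a < t < b) in HQ.
  set (Q := fun x' t => g (Psi y0 (f x') t)) in HQ.
  assert (Hagree : forall x' t, B x' t -> max_dom x' t -> max_flow x' t = Q x' t).
  { intros x' t [H1 H2] Ht. destruct (Hnbhd x' H1) as [Htau' [HU' _]].
    apply (max_flow_on_chart x' a b tau t U g); auto; [|intros s Hs; apply HBV; auto].
    apply (continuous_curve_sub (B x') _ (Q x'));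
      [intros s Hs; split; auto|apply jointly_continuous_section, (patch_cont _ _ HQ)]. }
  assert (Hmeet : forall x' t, B x' t -> exists t', max_dom x' t' /\ B x' t').
  { intros x' t [H1 H2]. exists tau. split; [apply Hnbhd; auto|split; auto]. }
  apply (psi_lift_le_max _ _ x sigma (psi_lift_glue _ _ B Q M HQ Hagree Hmeet)).
  right. split; auto. rewrite vsub_self, vnorm_0. auto.
Qed.

Lemma max_flow_on_lift x lo hi (c : R -> X) : D x -> lo <= 0 <= hi ->
  continuous_curve (fun s => lo <= s <= hi) c ->
  (forall s, lo <= s <= hi -> D (c s) /\ f (c s) = Psi y0 (f x) s) -> c 0 = x ->
  forall t, lo <= t <= hi -> max_dom x t -> max_flow x t = c t.
Proof.
  intros Hx H0 Hc Hcs Hc0 t Ht Hdt. pose proof max_lift as M.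
  apply (lift_unique (fun s => max_dom x s /\ lo <= s <= hi) (max_flow x) c 0 t).
  - intros u v w [Hu1 Hu2] [Hv1 Hv2] Hw. split; [apply (patch_interval _ _ M x u v)|]; auto; lra.
  - eapply continuous_curve_sub; [|apply jointly_continuous_section, (patch_cont _ _ M)].
    simpl; tauto.
  - eapply continuous_curve_sub; [|apply Hc]. simpl; tauto.
  - intros s [Hs1 Hs2]. split; [apply (patch_in_D _ _ M)|apply Hcs]; auto.
  - intros s [Hs1 Hs2]. rewrite (patch_conj _ _ M) by auto. symmetry; apply Hcs; auto.
  - split; [apply max_dom_zero|]; auto.
  - rewrite (lift_init _ _ M), Hc0; auto. apply max_dom_zero; auto.
  - split; auto.
Qed.

(** Every continuous lift [c] of [s |-> Psi (f x) s] starting at [x] is an orbit of the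
    maximal lift: [max_dom x] is locally constant along [c], by [max_dom_extend] applied
    with a chart at [c s]. *)
Lemma max_flow_lift x lo hi (c : R -> X) : D x -> lo <= 0 <= hi ->
  continuous_curve (fun s => lo <= s <= hi) c ->
  (forall s, lo <= s <= hi -> D (c s) /\ f (c s) = Psi y0 (f x) s) -> c 0 = x ->
  forall t, lo <= t <= hi -> max_dom x t /\ max_flow x t = c t.
Proof.
  intros Hx H0 Hc Hcs Hc0.
  pose proof (max_flow_on_lift x lo hi c Hx H0 Hc Hcs Hc0) as Hagree.
  assert (Hdom : forall t, lo <= t <= hi -> max_dom x t).
  { intros t Ht. apply (locally_constant_interval lo hi (max_dom x)) with (u := 0); auto;
      [|apply max_dom_zero; auto].
    intros s Hs. destruct (Hcs s Hs) as [HDs Hfs].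
    destruct (Hloc (c s) HDs) as [U [HUo [HUD [HUs [HVo [Hinj [_ [g [Hg Hgc]]]]]]]]].
    destruct (HVo (f (c s))) as [e0 [He0 HV]]; [exists (c s); auto|].
    destruct (HUo _ HUs) as [r [Hr Hbr]].
    destruct (Hc s Hs r Hr) as [dc [Hdc Hcc]].
    destruct (Psi_cont Y y0 (f x) s (e0 / 8) ltac:(lra)) as [dp [Hdp Hp]].
    set (m := Rmin dc dp).
    assert (Hm : 0 < m) by (apply Rmin_pos; auto).
    assert (Hm1 : m <= dc) by apply Rmin_l. assert (Hm2 : m <= dp) by apply Rmin_r.
    exists m. split; auto. intros u v Hu Hv Hus Hvs Hdu.
    assert (Hpu : f (max_flow x u) = Psi y0 (f x) u)
      by (rewrite (Hagree u Hu Hdu); apply Hcs; auto).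
    assert (Hnear : forall w, Rabs (w - s) < m ->
              vnorm (vsub (Psi y0 (f x) w) (Psi y0 (f x) s)) < e0 / 8).
    { intros w Hw. apply Hp; [rewrite vsub_self, vnorm_0|]; lra. }
    pose proof (Hnear u Hus) as Hnu.
    apply Rabs_def2 in Hus. apply Rabs_def2 in Hvs.
    apply (max_dom_extend x u v (s - m) (s + m) U g (e0 / 2)); auto; try lra.
    - rewrite (Hagree u Hu Hdu). apply Hbr, Hcc; auto. apply Rabs_def1; lra.
    - intros y Hy. apply HV. rewrite Hpu in Hy. rewrite Hfs.
      pose proof (vsub_triangle _ y (Psi y0 (f x) u) (Psi y0 (f x) s)). lra.
    - intros w Hw. rewrite Hpu.
      assert (Rabs (w - s) < m) by (apply Rabs_def1; lra).
      pose proof (Hnear w H). rewrite vnorm_sub_sym in Hnu.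
      pose proof (vsub_triangle _ (Psi y0 (f x) w) (Psi y0 (f x) s) (Psi y0 (f x) u)). lra. }
  intros t Ht. split; auto.
Qed.

Lemma flow_psi_lift E P : is_flow_in D E P -> conjugates f y0 E P -> psi_lift E P.
Proof.
  intros [HD [HO [HPD [HC [HI [H0 _]]]]]] Hcj. split; [split| |]; auto.
  - intros x a b t Ha Hb Ht. apply (proj2 (HI x (HD x a Ha)) a b); auto.
  - intros x t H. apply HI. eauto.
  - intros x Hx. apply H0. eauto.
Qed.

Lemma max_flow_is_flow : is_flow_in D max_dom max_flow.
Proof.
  pose proof max_lift as M.
  split; [exact (patch_dom _ _ M)|split; [exact (patch_open _ _ M)|]].
  split; [exact (patch_in_D _ _ M)|split; [exact (patch_cont _ _ M)|]].
  split; [intros x Hx; split; [apply max_dom_zero; auto|apply (patch_interval _ _ M)]|].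
  split; [intros x Hx; apply (lift_init _ _ M), max_dom_zero; auto|].
  intros x t1 t2 H1 H2.
  set (lo := Rmin 0 t2). set (hi := Rmax 0 t2).
  assert (Hlh : lo <= 0 <= hi /\ lo <= t2 <= hi)
    by (unfold lo, hi; repeat split; [apply Rmin_l|apply Rmax_l|apply Rmin_r|apply Rmax_r]).
  assert (Hsec : forall s, lo <= s <= hi -> max_dom x (t1 + s)).
  { intros s Hs. unfold lo, hi, Rmin, Rmax in Hs. destruct (Rle_dec 0 t2).
    - apply (patch_interval _ _ M x t1 (t1 + t2)); auto; lra.
    - apply (patch_interval _ _ M x (t1 + t2) t1); auto; lra. }
  destruct (max_flow_lift (max_flow x t1) lo hi (fun s => max_flow x (t1 + s))) with t2
    as [Ha Hb]; try tauto.
  - apply (patch_in_D _ _ M x t1); auto.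
  - intros s Hs eps He.
    destruct (patch_cont _ _ M x (t1 + s) (Hsec s Hs) eps He) as [d [Hd Hc]].
    exists d; split; auto. intros s' Hs' Hss. apply Hc; auto.
    + rewrite vsub_self, vnorm_0; auto.
    + replace (t1 + s' - (t1 + s)) with (s' - s) by ring. auto.
  - intros s Hs. split; [apply (patch_in_D _ _ M); auto|].
    rewrite !(patch_conj _ _ M), Psi_comp by auto. reflexivity.
  - rewrite Rplus_0_r. reflexivity.
Qed.
End Lifts.

Definition pair_size {X : BanachSpace} (p : X * R) : R := Rmax (vnorm (fst p)) (Rabs (snd p)).

Lemma Psi_frechet {X Y : BanachSpace} (y0 : Y) (U : X -> Prop) (f : X -> Y) x t L :
  frechet_at U f x L ->
  little_o pair_size (fun p => U (vadd x (fst p)))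
    (fun p => vsub (vsub (Psi y0 (f (vadd x (fst p))) (t + snd p)) (Psi y0 (f x) t))
                   (vadd (vscal (exp (- t)) (L (fst p)))
                         (vscal (snd p) (vopp (vsub (Psi y0 (f x) t) y0))))).
Proof.
  intros [HL Hf] eps He.
  destruct (lin_bound HL) as [ML [HML HbL]].
  set (e := exp (- t)). assert (He0 : 0 < e) by apply exp_pos.
  set (w := vsub (f x) y0). set (nw := vnorm w). assert (Hnw : 0 <= nw) by apply vnorm_nonneg.
  set (e2 := eps / (3 * (e + 1))). assert (He2 : 0 < e2) by (apply Rdiv_lt_0_compat; lra).
  set (e3 := Rmin 1 (eps / (3 * ML))).
  assert (He3 : 0 < e3) by (apply Rmin_pos; [lra|apply Rdiv_lt_0_compat; lra]).
  assert (He31 : e3 <= 1) by apply Rmin_l. assert (He32 : e3 <= eps / (3 * ML)) by apply Rmin_r.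
  set (e4 := eps / (3 * (nw + 1))). assert (He4 : 0 < e4) by (apply Rdiv_lt_0_compat; lra).
  destruct (Hf e2 He2) as [df [Hdf Hfb]].
  destruct (derivable_pt_lim_cont _ _ _ (derivable_pt_lim_expm t) e3 He3) as [d3 [Hd3 Hb3]].
  destruct (derivable_pt_lim_little_o _ _ _ (derivable_pt_lim_expm t) e4 He4) as [d4 [Hd4 Hb4]].
  exists (Rmin df (Rmin d3 d4)). split; [repeat apply Rmin_pos; auto|].
  intros [h s] Hm HU. unfold pair_size in *. simpl fst in *; simpl snd in *.
  set (m := Rmax (vnorm h) (Rabs s)) in *.
  assert (Hm1 : vnorm h <= m) by apply Rmax_l. assert (Hm2 : Rabs s <= m) by apply Rmax_r.
  assert (Hmd : m <= Rmin df (Rmin d3 d4)) by lra.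
  pose proof (Rmin_l df (Rmin d3 d4)). pose proof (Rmin_r df (Rmin d3 d4)).
  pose proof (Rmin_l d3 d4). pose proof (Rmin_r d3 d4).
  set (e' := exp (- (t + s))).
  assert (Hee : Rabs (e' - e) < e3)
    by (apply Hb3; replace (t + s - t) with s by ring; lra).
  assert (Hee2 : Rabs (e' - e - s * - e) <= e4 * Rabs s) by (apply Hb4; lra).
  assert (He' : 0 < e' <= e + 1) by (split; [apply exp_pos|apply Rabs_def2 in Hee; lra]).
  set (Dl := vsub (f (vadd x h)) (f x)).
  assert (HDl : vnorm (vsub Dl (L h)) <= e2 * vnorm h) by (apply Hfb; auto; lra).
  rewrite Psi_increment. fold e e' Dl w. eapply Rle_trans; [apply vnorm_triangle|].
  eapply Rle_trans; [apply Rplus_le_compat_r, vnorm_triangle|]. rewrite !vnorm_scal.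
  rewrite (Rabs_right e') by lra. fold nw.
  assert (T1 : e' * vnorm (vsub Dl (L h)) <= eps / 3 * m).
  { apply Rle_trans with ((e + 1) * (e2 * m)).
    - apply Rmult_le_compat; try lra; [apply vnorm_nonneg|].
      eapply Rle_trans; [apply HDl|apply Rmult_le_compat_l; lra].
    - right. unfold e2. field. lra. }
  assert (T2 : Rabs (e' - e) * vnorm (L h) <= eps / 3 * m).
  { apply Rle_trans with (e3 * (ML * m)).
    - apply Rmult_le_compat; try lra; [apply Rabs_pos|apply vnorm_nonneg|].
      eapply Rle_trans; [apply HbL|apply Rmult_le_compat_l; lra].
    - apply Rle_trans with (eps / (3 * ML) * (ML * m)).
      + apply Rmult_le_compat_r; [pose proof (vnorm_nonneg _ h); nra|lra].
      + right. field. lra. }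
  assert (T3 : Rabs (e' - e - s * - e) * nw <= eps / 3 * m).
  { apply Rle_trans with (e4 * m * (nw + 1)).
    - apply Rmult_le_compat; try lra; [apply Rabs_pos|].
      eapply Rle_trans; [apply Hee2|apply Rmult_le_compat_l; lra].
    - right. unfold e4. field. lra. }
  lra.
Qed.

Section C1Flow.
Variables X Y : BanachSpace.
Variable D : X -> Prop.
Variable f : X -> Y.
Variable y0 : Y.
Hypothesis HDo : is_open D.
Hypothesis Hloc : local_homeomorphism D f.
Hypothesis HC1 : local_C1_diffeomorphism D f.
Variable Df : X -> X -> Y.
Hypothesis HDf : frechet_derivative_on D f Df.
Variable F : X -> X.
Hypothesis HF : forall x, D x -> Df x (F x) = vopp (vsub (f x) y0).

Local Notation MD := (max_dom X Y D f y0).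
Local Notation MF := (max_flow X Y D f y0).

Lemma Df_continuous x : D x -> forall eps, 0 < eps -> exists delta, 0 < delta /\
  forall x', D x' -> vnorm (vsub x' x) < delta ->
    forall h, vnorm (vsub (Df x' h) (Df x h)) <= eps * vnorm h.
Proof.
  intros Hx eps He. destruct HC1 as [[Df' [HDf' Hc]] _].
  destruct (Hc x Hx eps He) as [d [Hd Hb]]. exists d; split; auto.
  intros x' Hx' Hxx h.
  rewrite (frechet_unique X Y D f x' (Df x') (Df' x') HDo Hx' (HDf x' Hx') (HDf' x' Hx')).
  rewrite (frechet_unique X Y D f x (Df x) (Df' x) HDo Hx (HDf x Hx) (HDf' x Hx)).
  apply Hb; auto.
Qed.

Definition C1_chart (p : X) (U : X -> Prop) (g : Y -> X) (Dg : Y -> Y -> X) :=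
  is_open U /\ (forall u, U u -> D u) /\ U p /\ is_open (image f U) /\ injective_on U f /\
  (forall v, image f U v -> U (g v) /\ f (g v) = v) /\
  frechet_derivative_on (image f U) g Dg /\
  (forall y, image f U y -> forall eps, 0 < eps -> exists delta, 0 < delta /\
      forall y', image f U y' -> vnorm (vsub y' y) < delta ->
        forall h, vnorm (vsub (Dg y' h) (Dg y h)) <= eps * vnorm h) /\
  (forall q, U q -> (forall h, Dg (f q) (Df q h) = h) /\ (forall w, Df q (Dg (f q) w) = w)).

Lemma C1_chart_exists p : D p -> exists U g Dg, C1_chart p U g Dg.
Proof.
  intro Hp. destruct HC1 as [_ Hch].
  destruct (Hch p Hp) as [U [HUo [HUD [HUp [HVo [Hinj [_ [g [Hg [Dg [HDg HDgc]]]]]]]]]]].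
  exists U, g, Dg. repeat (split; auto).
  - intro h. apply (frechet_unique X X U (fun u => u) q (fun h => Dg (f q) (Df q h)) (fun h => h));
      auto; [|apply frechet_id].
    apply (frechet_ext X X U (fun u => g (f u))); auto;
      [intros u Hu; apply (chart_inverse f U); auto|].
    apply (frechet_comp X Y X U (image f U)); auto.
    + apply (frechet_restrict X Y D); auto.
    + apply HDg. exists q; auto.
    + intros u Hu; exists u; auto.
  - intro w. assert (Hgq : g (f q) = q) by (apply (chart_inverse f U); auto).
    apply (frechet_unique Y Y (image f U) (fun v => v) (f q) (fun w => Df q (Dg (f q) w))
             (fun w => w)); auto; [exists q; auto| |apply frechet_id].
    apply (frechet_ext Y Y (image f U) (fun v => f (g v)));
      [intros v Hv; apply Hg; auto|exists q; auto|].
    pose proof (frechet_comp Y X Y (image f U) D g f (f q) (Dg (f q)) (Df (g (f q)))) as Hc.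
    rewrite Hgq in Hc. apply Hc.
    + apply HDg. exists q; auto.
    + apply HDf, HUD; auto.
    + intros v Hv. apply HUD, Hg; auto.
Qed.

(** A right inverse of [Df q]; it is the inverse wherever a [C1_chart] exists. *)
Definition Df_inv (q : X) (w : Y) : X := epsilon (inhabits vzero) (fun h => Df q h = w).

Lemma Df_inv_chart p U g Dg q w : C1_chart p U g Dg -> U q -> Df_inv q w = Dg (f q) w.
Proof.
  intros Hc Hq. destruct Hc as [_ [_ [_ [_ [_ [_ [_ [_ HK]]]]]]]]. destruct (HK q Hq) as [K1 K2].
  unfold Df_inv. set (h0 := epsilon _ _).
  assert (Hh : Df q h0 = w) by (apply epsilon_spec; exists (Dg (f q) w); apply K2).
  rewrite <- Hh, K1. reflexivity.
Qed.

Lemma F_chart p U g Dg q : C1_chart p U g Dg -> U q ->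
  F q = Dg (f q) (vopp (vsub (f q) y0)).
Proof.
  intros Hc Hq. pose proof Hc as [_ [HUD [_ [_ [_ [_ [_ [_ HK]]]]]]]].
  rewrite <- HF by auto. symmetry. apply (HK q Hq).
Qed.

Definition dflow_x x t h := Df_inv (MF x t) (vscal (exp (- t)) (Df x h)).
Definition dflow_t x t := F (MF x t).

Lemma max_flow_chart x t : MD x t -> exists U g Dg rho,
  C1_chart (MF x t) U g Dg /\ 0 < rho /\
  forall x' t', MD x' t' -> vnorm (vsub x' x) < rho -> Rabs (t' - t) < rho ->
    image f U (Psi y0 (f x') t') /\ MF x' t' = g (Psi y0 (f x') t') /\
    (forall h, dflow_x x' t' h = Dg (Psi y0 (f x') t') (vscal (exp (- t')) (Df x' h))) /\
    dflow_t x' t' = Dg (Psi y0 (f x') t') (vopp (vsub (Psi y0 (f x') t') y0)).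
Proof.
  intros Hxt. pose proof (max_lift X Y D f y0 Hloc) as M.
  destruct (C1_chart_exists (MF x t)) as [U [g [Dg Hc]]];
    [apply (patch_in_D _ _ _ _ _ _ _ M); auto|].
  pose proof Hc as [HUo [HUD [HUp [_ [Hinj [Hg _]]]]]].
  destruct (HUo _ HUp) as [r [Hr Hb]].
  destruct (patch_cont _ _ _ _ _ _ _ M x t Hxt r Hr) as [d [Hd Hcc]].
  exists U, g, Dg, d. split; auto. split; auto. intros x' t' H' H1 H2.
  assert (HU : U (MF x' t')) by (apply Hb, Hcc; auto).
  assert (Hf : f (MF x' t') = Psi y0 (f x') t') by (apply (patch_conj _ _ _ _ _ _ _ M); auto).
  rewrite <- Hf. split; [exists (MF x' t'); auto|].
  split; [symmetry; apply (chart_inverse f U); auto|].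
  split; [intro h; unfold dflow_x; apply (Df_inv_chart (MF x t) U g); auto|].
  unfold dflow_t. apply (F_chart (MF x t) U g); auto.
Qed.

Lemma Rabs_self_lt t d : 0 < d -> Rabs (t - t) < d.
Proof. intro. rewrite Rminus_diag_eq, Rabs_R0; auto. Qed.

Lemma vnorm_self_lt {B : BanachSpace} (x : B) d : 0 < d -> vnorm (vsub x x) < d.
Proof. intro. rewrite vsub_self, vnorm_0; auto. Qed.

Lemma dflow_x_linear x t : MD x t -> bounded_linear (dflow_x x t).
Proof.
  intros Hxt. destruct (max_flow_chart x t Hxt) as [U [g [Dg [rho [Hc [Hrho Hrep]]]]]].
  destruct (Hrep x t Hxt (vnorm_self_lt _ _ Hrho) (Rabs_self_lt _ _ Hrho)) as [HVy [_ [HA _]]].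
  pose proof Hc as [_ [_ [_ [_ [_ [_ [HDg _]]]]]]].
  assert (Hx : D x) by (apply (patch_dom _ _ _ _ _ _ _ (max_lift X Y D f y0 Hloc) x t); auto).
  apply (lin_ext (fun h => Dg (Psi y0 (f x) t) (vscal (exp (- t)) (Df x h)))); [intro; auto|].
  apply (lin_comp (L := fun h => vscal (exp (- t)) (Df x h))); [|apply (proj1 (HDg _ HVy))].
  apply (lin_comp (L := Df x)); [apply (proj1 (HDf x Hx))|apply lin_vscal].
Qed.

Lemma max_flow_expansion x t : MD x t -> forall eps, 0 < eps -> exists delta, 0 < delta /\
  forall h s, vnorm h < delta -> Rabs s < delta -> MD (vadd x h) (t + s) ->
    vnorm (vsub (vsub (MF (vadd x h) (t + s)) (MF x t))
                (vadd (dflow_x x t h) (vscal s (dflow_t x t))))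
      <= eps * Rmax (vnorm h) (Rabs s).
Proof.
  intros Hxt eps He. pose proof (max_lift X Y D f y0 Hloc) as M.
  destruct (max_flow_chart x t Hxt) as [U [g [Dg [rho [Hc [Hrho Hrep]]]]]].
  destruct (Hrep x t Hxt (vnorm_self_lt _ _ Hrho) (Rabs_self_lt _ _ Hrho)) as [HVy [Hp [HA HB]]].
  pose proof Hc as [_ [_ [_ [_ [_ [_ [HDg _]]]]]]].
  assert (Hx : D x) by (apply (patch_dom _ _ _ _ _ _ _ M x t); auto).
  set (y := Psi y0 (f x) t) in *. set (e := exp (- t)) in *.
  destruct (lin_bound (proj1 (HDf x Hx))) as [ML [HML HbL]].
  set (l := fun p : X * R => vadd (vscal e (Df x (fst p))) (vscal (snd p) (vopp (vsub y y0)))).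
  assert (Hl : forall p, vnorm (l p) <= (e * ML + vnorm (vsub y y0)) * pair_size p).
  { intros [h s]. unfold l, pair_size. simpl. eapply Rle_trans; [apply vnorm_triangle|].
    rewrite !vnorm_scal, vnorm_opp, Rabs_right by (apply Rle_ge, Rlt_le, exp_pos).
    pose proof (Rmax_l (vnorm h) (Rabs s)). pose proof (Rmax_r (vnorm h) (Rabs s)).
    assert (0 < e) by apply exp_pos. pose proof (vnorm_nonneg _ h).
    assert (e * vnorm (Df x h) <= e * (ML * Rmax (vnorm h) (Rabs s)))
      by (apply Rmult_le_compat_l;
          [lra|eapply Rle_trans; [apply HbL|apply Rmult_le_compat_l; lra]]).
    assert (Rabs s * vnorm (vsub y y0) <= Rmax (vnorm h) (Rabs s) * vnorm (vsub y y0))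
      by (apply Rmult_le_compat_r; [apply vnorm_nonneg|lra]).
    nra. }
  set (dom := fun p : X * R => MD (vadd x (fst p)) (t + snd p) /\ pair_size p < rho).
  assert (Hdom : forall p, dom p ->
            vnorm (vsub (vadd x (fst p)) x) < rho /\ Rabs (t + snd p - t) < rho).
  { intros [h s] [_ Hp']. unfold pair_size in Hp'. simpl in *.
    rewrite vadd_sub_cancel_l. replace (t + s - t) with s by ring.
    pose proof (Rmax_l (vnorm h) (Rabs s)). pose proof (Rmax_r (vnorm h) (Rabs s)). lra. }
  assert (Hlo := little_o_chain pair_size dom (fun p => Psi y0 (f (vadd x (fst p))) (t + snd p)) l
                   y _ (image f U) g (Dg y) Hl
                   (little_o_dom _ _ _ _ (fun p Hp => patch_dom _ _ _ _ _ _ _ M _ _ (proj1 Hp))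
                      (Psi_frechet y0 D f x t (Df x) (HDf x Hx)))
                   (HDg y HVy)
                   (fun p Hp => proj1 (Hrep _ _ (proj1 Hp) (proj1 (Hdom p Hp)) (proj2 (Hdom p Hp))))).
  destruct (Hlo eps He) as [d [Hd Hb]].
  exists (Rmin d rho). split; [apply Rmin_pos; auto|]. intros h s Hh Hs HE.
  assert (Hsz : pair_size (h, s) < Rmin d rho) by (apply Rmax_lub_lt; auto).
  pose proof (Rmin_l d rho). pose proof (Rmin_r d rho).
  assert (Hd' : dom (h, s)) by (split; auto; lra).
  specialize (Hb (h, s) ltac:(lra) Hd'). simpl in Hb.
  destruct (Hrep _ _ HE (proj1 (Hdom _ Hd')) (proj2 (Hdom _ Hd'))) as [_ [Hq _]].
  rewrite Hq, Hp, HA, HB, <- (lin_scal (proj1 (HDg y HVy))), <- (lin_add (proj1 (HDg y HVy))).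
  exact Hb.
Qed.

Lemma scaled_Df_continuous x t : D x -> forall eps, 0 < eps -> exists delta, 0 < delta /\
  forall x' t', D x' -> vnorm (vsub x' x) < delta -> Rabs (t' - t) < delta ->
    forall h, vnorm (vsub (vscal (exp (- t')) (Df x' h)) (vscal (exp (- t)) (Df x h)))
                <= eps * vnorm h.
Proof.
  intros Hx eps He. set (e := exp (- t)). assert (He0 : 0 < e) by apply exp_pos.
  destruct (lin_bound (proj1 (HDf x Hx))) as [ML [HML HbL]].
  set (e6 := eps / (2 * (e + 1))). assert (He6 : 0 < e6) by (apply Rdiv_lt_0_compat; lra).
  set (e7 := Rmin 1 (eps / (2 * ML))).
  assert (He7 : 0 < e7) by (apply Rmin_pos; [lra|apply Rdiv_lt_0_compat; lra]).
  assert (He71 : e7 <= 1) by apply Rmin_l. assert (He72 : e7 <= eps / (2 * ML)) by apply Rmin_r.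
  destruct (Df_continuous x Hx e6 He6) as [d6 [Hd6 Hb6]].
  destruct (derivable_pt_lim_cont _ _ _ (derivable_pt_lim_expm t) e7 He7) as [d7 [Hd7 Hb7]].
  exists (Rmin d6 d7). split; [apply Rmin_pos; auto|].
  intros x' t' Hx' Hxx Htt h. pose proof (Rmin_l d6 d7). pose proof (Rmin_r d6 d7).
  set (e' := exp (- t')). fold e.
  assert (Hee : Rabs (e' - e) < e7) by (apply Hb7; lra).
  assert (He' : 0 < e' <= e + 1) by (split; [apply exp_pos|apply Rabs_def2 in Hee; lra]).
  rewrite vsub_scal_scal. eapply Rle_trans; [apply vnorm_triangle|].
  rewrite !vnorm_scal, (Rabs_right e') by lra.
  assert (e' * vnorm (vsub (Df x' h) (Df x h)) <= (e + 1) * (e6 * vnorm h))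
    by (apply Rmult_le_compat; try lra; [apply vnorm_nonneg|apply Hb6; auto; lra]).
  assert (Rabs (e' - e) * vnorm (Df x h) <= e7 * (ML * vnorm h))
    by (apply Rmult_le_compat; try lra; [apply Rabs_pos|apply vnorm_nonneg|apply HbL]).
  assert ((e + 1) * e6 = eps / 2) by (unfold e6; field; lra).
  assert (e7 * ML <= eps / 2)
    by (apply Rle_trans with (eps / (2 * ML) * ML); [apply Rmult_le_compat_r|right; field]; lra).
  pose proof (vnorm_nonneg _ h). nra.
Qed.

Lemma dflow_x_continuous x t : MD x t -> forall eps, 0 < eps -> exists delta, 0 < delta /\
  forall x' t', MD x' t' -> vnorm (vsub x' x) < delta -> Rabs (t' - t) < delta ->
    forall h, vnorm (vsub (dflow_x x' t' h) (dflow_x x t h)) <= eps * vnorm h.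
Proof.
  intros Hxt eps He. pose proof (max_lift X Y D f y0 Hloc) as M.
  destruct (max_flow_chart x t Hxt) as [U [g [Dg [rho [Hc [Hrho Hrep]]]]]].
  destruct (Hrep x t Hxt (vnorm_self_lt _ _ Hrho) (Rabs_self_lt _ _ Hrho)) as [HVy [_ [HA _]]].
  pose proof Hc as [_ [_ [_ [_ [_ [_ [HDg [HDgc _]]]]]]]].
  assert (Hx : D x) by (apply (patch_dom _ _ _ _ _ _ _ M x t); auto).
  set (y := Psi y0 (f x) t) in *.
  pose proof (proj1 (HDg y HVy)) as HM. destruct (lin_bound HM) as [KM [HKM HbM]].
  assert (HL : bounded_linear (fun h => vscal (exp (- t)) (Df x h)))
    by (apply (lin_comp (L := Df x)); [apply (proj1 (HDf x Hx))|apply lin_vscal]).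
  destruct (lin_bound HL) as [KL [HKL HbL]].
  set (e1 := Rmin 1 (eps / (2 * (KM + 1)))).
  assert (He1 : 0 < e1) by (apply Rmin_pos; [lra|apply Rdiv_lt_0_compat; lra]).
  assert (He11 : e1 <= 1) by apply Rmin_l.
  assert (He12 : e1 <= eps / (2 * (KM + 1))) by apply Rmin_r.
  set (e2 := eps / (2 * (KL + 1))). assert (He2 : 0 < e2) by (apply Rdiv_lt_0_compat; lra).
  destruct (scaled_Df_continuous x t Hx e1 He1) as [d1 [Hd1 Hb1]].
  destruct (HDgc y HVy e2 He2) as [d2 [Hd2 Hb2]].
  destruct (Psi_f_continuous X Y D f y0 Hloc x t Hx d2 Hd2) as [d3 [Hd3 Hb3]].
  exists (Rmin rho (Rmin d1 d3)). split; [repeat apply Rmin_pos; auto|].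
  intros x' t' HE Hxx Htt h.
  pose proof (Rmin_l rho (Rmin d1 d3)). pose proof (Rmin_r rho (Rmin d1 d3)).
  pose proof (Rmin_l d1 d3). pose proof (Rmin_r d1 d3).
  destruct (Hrep x' t' HE ltac:(lra) ltac:(lra)) as [HVq [_ [HA' _]]].
  destruct (Hb3 x' t' ltac:(lra) ltac:(lra)) as [Hx' Hyy].
  rewrite HA, HA'. eapply Rle_trans.
  - apply (op_comp_close (fun h => vscal (exp (- t)) (Df x h))
             (fun h => vscal (exp (- t')) (Df x' h)) (Dg y) (Dg (Psi y0 (f x') t')) KL KM e1 e2);
      auto; try lra.
    + intro h'. apply Hb1; auto; lra.
  - apply Rmult_le_compat_r; [apply vnorm_nonneg|].
    assert (e2 * (KL + e1) <= eps / 2).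
    { apply Rle_trans with (e2 * (KL + 1)); [apply Rmult_le_compat_l; lra|].
      right. unfold e2. field. lra. }
    assert (KM * e1 <= eps / 2).
    { apply Rle_trans with ((KM + 1) * (eps / (2 * (KM + 1)))); [|right; field; lra].
      apply Rmult_le_compat; lra. }
    lra.
Qed.

Lemma dflow_t_continuous x t : MD x t -> forall eps, 0 < eps -> exists delta, 0 < delta /\
  forall x' t', MD x' t' -> vnorm (vsub x' x) < delta -> Rabs (t' - t) < delta ->
    vnorm (vsub (dflow_t x' t') (dflow_t x t)) <= eps.
Proof.
  intros Hxt eps He. pose proof (max_lift X Y D f y0 Hloc) as M.
  destruct (max_flow_chart x t Hxt) as [U [g [Dg [rho [Hc [Hrho Hrep]]]]]].
  destruct (Hrep x t Hxt (vnorm_self_lt _ _ Hrho) (Rabs_self_lt _ _ Hrho)) as [HVy [_ [_ HB]]].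
  pose proof Hc as [_ [_ [_ [_ [_ [_ [HDg [HDgc _]]]]]]]].
  assert (Hx : D x) by (apply (patch_dom _ _ _ _ _ _ _ M x t); auto).
  set (y := Psi y0 (f x) t) in *. set (ny := vnorm (vsub y y0)).
  assert (Hny : 0 <= ny) by apply vnorm_nonneg.
  pose proof (proj1 (HDg y HVy)) as HM. destruct (lin_bound HM) as [KM [HKM HbM]].
  set (e5 := eps / (2 * (ny + 1))). assert (He5 : 0 < e5) by (apply Rdiv_lt_0_compat; lra).
  set (eta := Rmin 1 (eps / (2 * KM))).
  assert (Heta : 0 < eta) by (apply Rmin_pos; [lra|apply Rdiv_lt_0_compat; lra]).
  assert (Heta1 : eta <= 1) by apply Rmin_l. assert (Heta2 : eta <= eps / (2 * KM)) by apply Rmin_r.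
  destruct (HDgc y HVy e5 He5) as [d5 [Hd5 Hb5]].
  destruct (Psi_f_continuous X Y D f y0 Hloc x t Hx (Rmin eta d5)) as [d3 [Hd3 Hb3]];
    [apply Rmin_pos; auto|].
  exists (Rmin rho d3). split; [apply Rmin_pos; auto|].
  intros x' t' HE Hxx Htt. pose proof (Rmin_l rho d3). pose proof (Rmin_r rho d3).
  destruct (Hrep x' t' HE ltac:(lra) ltac:(lra)) as [HVq [_ [_ HB']]].
  destruct (Hb3 x' t' ltac:(lra) ltac:(lra)) as [_ Hyy]. fold y in Hyy.
  pose proof (Rmin_l eta d5). pose proof (Rmin_r eta d5).
  set (y' := Psi y0 (f x') t') in *.
  assert (Hclose : forall w, vnorm (vsub (Dg y' w) (Dg y w)) <= e5 * vnorm w)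
    by (apply Hb5; auto; lra).
  rewrite HB, HB'. eapply Rle_trans; [apply (lin_apply_close (Dg y) (Dg y') KM e5); auto|].
  rewrite vsub_opp, vsub_sub_sub, !vnorm_opp.
  assert (vnorm (vsub y' y0) <= ny + 1) by (pose proof (vsub_triangle _ y' y y0); unfold ny; lra).
  assert (e5 * vnorm (vsub y' y0) <= eps / 2).
  { apply Rle_trans with (e5 * (ny + 1)); [apply Rmult_le_compat_l; lra|].
    right. unfold e5. field. lra. }
  assert (KM * vnorm (vsub y' y) <= eps / 2).
  { apply Rle_trans with (KM * (eps / (2 * KM))); [|right; field; lra].
    apply Rmult_le_compat_l; lra. }
  lra.
Qed.

Lemma max_flow_deriv x t : MD x t -> curve_deriv_at (MD x) (MF x) t (F (MF x t)).
Proof.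
  intros H eps He. destruct (max_flow_expansion x t H eps He) as [d [Hd Hb]].
  exists d; split; auto. intros s Hs HE.
  specialize (Hb vzero s). rewrite vadd_zero, vnorm_0, Rmax_right in Hb by apply Rabs_pos.
  specialize (Hb Hd Hs HE). rewrite (lin_0 (dflow_x_linear x t H)), vadd_0l in Hb. exact Hb.
Qed.

(** Along a solution, [exp s * (f (gamma s) - y0)] has derivative zero, so [f o gamma]
    follows [Psi] and [gamma] is a lift of it. *)
Lemma ode_solution_max_flow x (J : R -> Prop) (gamma : R -> X) : D x ->
  open_interval_R J -> J 0 -> gamma 0 = x -> (forall t, J t -> D (gamma t)) ->
  (forall t, J t -> curve_deriv_at J gamma t (F (gamma t))) ->
  forall t, J t -> MD x t /\ gamma t = MF x t.
Proof.
  intros Hx [_ HI] HJ0 Hg0 HgD Hgd t Ht.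
  set (v := fun s => vscal (exp s) (vsub (f (gamma s)) y0)).
  assert (Hv : forall s, J s -> curve_deriv_at J v s vzero).
  { intros s Hs.
    assert (H1 : curve_deriv_at J (fun r => vsub (f (gamma r)) y0) s
                   (vopp (vsub (f (gamma s)) y0))).
    { rewrite <- (vsub_0r _ (vopp _)). apply curve_deriv_sub; [|apply curve_deriv_const].
      rewrite <- HF by auto. apply (curve_deriv_comp X Y J D); auto. }
    pose proof (curve_deriv_scal Y J exp _ s (exp s) _ (derivable_pt_lim_exp s) H1) as H2.
    rewrite vscal_opp_r, vadd_opp in H2. exact H2. }
  assert (Hfg : forall s, J s -> f (gamma s) = Psi y0 (f x) s).
  { intros s Hs. assert (Hvs : v s = v 0) by (apply (curve_deriv_zero_const J v); auto).
    unfold v in Hvs. rewrite exp_0, vscal_one, Hg0 in Hvs.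
    unfold Psi. rewrite <- Hvs, vscal_assoc, <- exp_plus, Rplus_opp_l, exp_0, vscal_one.
    symmetry. apply vadd_sub_r. }
  set (lo := Rmin 0 t). set (hi := Rmax 0 t).
  assert (HJlh : forall s, lo <= s <= hi -> J s).
  { intros s Hs. unfold lo, hi, Rmin, Rmax in Hs.
    destruct (Rle_dec 0 t); [apply (HI 0 t)|apply (HI t 0)]; auto; lra. }
  destruct (max_flow_lift X Y D f y0 Hloc x lo hi gamma Hx) with t as [Ha Hb]; auto.
  - split; [apply Rmin_l|apply Rmax_l].
  - apply (continuous_curve_sub J); auto.
    apply (curve_deriv_continuous X J gamma (fun s => F (gamma s))); auto.
  - split; [apply Rmin_r|apply Rmax_r].
Qed.

Lemma max_flow_C1 : C1_on_XR MD MF.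
Proof.
  exists dflow_x, dflow_t. intros x t H.
  split; [apply dflow_x_linear; auto|]. split; [apply max_flow_expansion; auto|].
  intros eps He.
  destruct (dflow_x_continuous x t H eps He) as [d1 [Hd1 H1]].
  destruct (dflow_t_continuous x t H eps He) as [d2 [Hd2 H2]].
  exists (Rmin d1 d2). split; [apply Rmin_pos; auto|].
  intros x' t' H' Hx Ht. pose proof (Rmin_l d1 d2). pose proof (Rmin_r d1 d2).
  split; [apply H1|apply H2]; auto; lra.
Qed.

Lemma max_flow_ode : maximal_ode_flow D F MD MF.
Proof.
  intros x Hx. split; [intros t Ht; apply max_flow_deriv; auto|].
  intros J gamma HJ HJ0 Hg0 HgD Hgd. apply ode_solution_max_flow; auto.
Qed.
End C1Flow.

Theorem lemma2p1 (X Y : BanachSpace) (D : X -> Prop) (x0 : X) (f : X -> Y) :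
  (exists x, D x) -> is_open D -> is_connected D -> D x0 ->
  local_homeomorphism D f ->
  (forall DPhi1 Phi1 DPhi2 Phi2,
     is_flow_in D DPhi1 Phi1 -> conjugates f (f x0) DPhi1 Phi1 ->
     is_flow_in D DPhi2 Phi2 -> conjugates f (f x0) DPhi2 Phi2 ->
     forall x t, DPhi1 x t -> DPhi2 x t -> Phi1 x t = Phi2 x t) /\
  (exists (DPhi : X -> R -> Prop) (Phi : X -> R -> X),
     is_flow_in D DPhi Phi /\ conjugates f (f x0) DPhi Phi /\
     (forall DPhi' Phi', is_flow_in D DPhi' Phi' -> conjugates f (f x0) DPhi' Phi' ->
        forall x t, DPhi' x t -> DPhi x t) /\
     (local_C1_diffeomorphism D f ->
      forall Df : X -> X -> Y, frechet_derivative_on D f Df ->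
      forall F : X -> X, (forall x, D x -> Df x (F x) = vopp (vsub (f x) (f x0))) ->
      C1_on_XR DPhi Phi /\ maximal_ode_flow D F DPhi Phi)).
Proof.
  intros _ HDo _ _ Hloc. set (y0 := f x0). split.
  - intros E1 P1 E2 P2 H1 C1 H2 C2 x t Hx1 Hx2.
    apply (psi_lift_agree X Y D f y0 Hloc E1 P1 E2 P2); auto; apply flow_psi_lift; auto.
  - exists (max_dom X Y D f y0), (max_flow X Y D f y0).
    pose proof (max_lift X Y D f y0 Hloc) as M.
    split; [apply max_flow_is_flow; auto|].
    split; [apply (patch_conj _ _ _ _ _ _ _ M)|].
    split; [intros E P HE HC x t H; apply (psi_lift_le_max _ _ _ _ _ E P); auto;
            apply flow_psi_lift; auto|].
    intros HC1 Df HDf F HF.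
    split; [eapply max_flow_C1|eapply max_flow_ode]; eauto.
Qed.
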